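(* Let $\Omega\subset\mathbb{R}^2$ be a domain and $u\in C^{2}(\Omega)$. Let $S(u)=\{(x,y)\in\Omega:u_x-y=0,\ u_y+x=0\}$, on $\Omega\setminus S(u)$ let $N(u)=(u_x-y,u_y+x)/\sqrt{(u_x-y)^2+(u_y+x)^2}$ and $H=\operatorname{div}N(u)$. Let $$U=\begin{pmatrix}u_{xx}&u_{xy}-1\\ u_{xy}+1&u_{yy}\end{pmatrix}.$$ Let $p_0\in S(u)$ and suppose there are a constant $C>0$ and a neighborhood of $p_0$ on which $|H(p)|\le C/r(p)$ for $p\notin S(u)$, where $r(p)=|p-p_0|$. Then the following are equivalent: (1) $p_0$ is not isolated in $S(u)$; (2) $\det U(p_0)=0$; (3) there exists a small neighborhood of $p_0$ which intersects $S(u)$ in exactly a $C^{1}$ smooth curve passing through $p_0$.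
   Context: $\operatorname{div}$ is the Euclidean divergence in the $xy$-plane. *)

From Stdlib Require Import Reals.
From Coquelicot Require Import Coquelicot.
Open Scope R_scope.

Definition connected2 (O : R * R -> Prop) : Prop :=
  ~ (exists A B : R * R -> Prop, open A /\ open B /\
       (forall p, O p -> A p \/ B p) /\
       (exists p, O p /\ A p) /\ (exists p, O p /\ B p) /\
       (forall p, O p -> A p -> B p -> False)).

Definition domain2 (O : R * R -> Prop) : Prop :=
  open O /\ (exists p, O p) /\ connected2 O.

Definition dx (f : R * R -> R) (p : R * R) : R :=
  Derive (fun t => f (t, snd p)) (fst p).
Definition dy (f : R * R -> R) (p : R * R) : R :=
  Derive (fun t => f (fst p, t)) (snd p).
Definition ex_dx (f : R * R -> R) (p : R * R) : Prop :=
  ex_derive (fun t => f (t, snd p)) (fst p).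
Definition ex_dy (f : R * R -> R) (p : R * R) : Prop :=
  ex_derive (fun t => f (fst p, t)) (snd p).

Definition C1_on (O : R * R -> Prop) (f : R * R -> R) : Prop :=
  forall p, O p ->
    continuous f p /\ ex_dx f p /\ ex_dy f p /\
    continuous (dx f) p /\ continuous (dy f) p.

Definition C2_on (O : R * R -> Prop) (f : R * R -> R) : Prop :=
  C1_on O f /\ C1_on O (dx f) /\ C1_on O (dy f).

Definition Sset (O : R * R -> Prop) (u : R * R -> R) (p : R * R) : Prop :=
  O p /\ dx u p - snd p = 0 /\ dy u p + fst p = 0.

Definition Nnorm (u : R * R -> R) (p : R * R) : R :=
  sqrt ((dx u p - snd p) ^ 2 + (dy u p + fst p) ^ 2).
Definition N1 (u : R * R -> R) (p : R * R) : R := (dx u p - snd p) / Nnorm u p.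
Definition N2 (u : R * R -> R) (p : R * R) : R := (dy u p + fst p) / Nnorm u p.

Definition Hcurv (u : R * R -> R) (p : R * R) : R :=
  dx (N1 u) p + dy (N2 u) p.

Definition detU (u : R * R -> R) (p : R * R) : R :=
  dx (dx u) p * dy (dy u) p - (dy (dx u) p - 1) * (dy (dx u) p + 1).

Definition dist2 (p q : R * R) : R :=
  sqrt ((fst p - fst q) ^ 2 + (snd p - snd q) ^ 2).

Definition regular_C1_arc (a b : R) (g : R -> R * R) : Prop :=
  a < b /\
  (forall t, a < t < b ->
     ex_derive (fun s => fst (g s)) t /\ ex_derive (fun s => snd (g s)) t /\
     continuous (Derive (fun s => fst (g s))) t /\
     continuous (Derive (fun s => snd (g s))) t /\
     (Derive (fun s => fst (g s)) t <> 0 \/ Derive (fun s => snd (g s)) t <> 0)) /\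
  (forall s t, a < s < b -> a < t < b -> g s = g t -> s = t).

(* Write F = (P, Q) = (u_x - y, u_y + x): then S(u) is the zero set of F, U is the Jacobian
   matrix of F (by Schwarz), and off S(u) the curvature is H = N / |F|^3 for the quadratic form
   N = Q^2 P_x - P Q (P_y + Q_x) + P^2 Q_y.  If det U(p0) <> 0, the mean value theorem shows
   that F does not vanish near p0 except at p0.  If det U(p0) = 0, U(p0) has rank one, since
   Q_x - P_y = 2; so some component G of F (after possibly exchanging x and y) has a nonzero
   vertical derivative, and {G = 0} is a C^1 graph near p0 by the implicit function theorem.
   The curvature bound forces the other component K to vanish on that graph: if K = phi <> 0 at
   a zero of G at distance r from p0, then phi = o(r), and at the point obtained by a vertical
   shift lam * phi (lam chosen so that N = 1 at p0 in the shifted direction) one has N ~ phi^2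
   and |F| = O(|phi|), so |H| r would be unbounded.  Hence near p0, S(u) is that graph. *)

From Stdlib Require Import Reals Lra Psatz ClassicalEpsilon List.
From Coquelicot Require Import Coquelicot.
Open Scope R_scope.

Lemma Rabs_le_bounds x y : Rabs x <= y -> - y <= x <= y.
Proof. unfold Rabs; destruct Rcase_abs; intros; lra. Qed.

Lemma near_keeps_sign a g e : Rabs (g - a) <= e -> e <= Rabs a / 2 ->
  a * g >= a * a / 2 /\ Rabs a / 2 <= Rabs g.
Proof.
  intros H He; apply Rabs_le_bounds in H; revert He.
  unfold Rabs; destruct (Rcase_abs a); destruct (Rcase_abs g); intros; split; nra.
Qed.

Lemma abs_bound_of_near A a e : Rabs (A - a) <= e -> e <= 1 -> Rabs A <= Rabs a + 1.
Proof.
  intros H He; replace A with ((A - a) + a) by ring.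
  eapply Rle_trans; [apply Rabs_triang | lra].
Qed.

Lemma exists_small_scale (l : list R) : exists e, 0 < e <= 1 /\ forall k, In k l -> e * Rabs k <= 1/2.
Proof.
  induction l as [| k0 l [e [He Hl]]].
  - exists 1; split; [lra | intros k []].
  - assert (Hk := Rabs_pos k0).
    set (e' := Rmin e (/ (2 * (Rabs k0 + 1)))).
    assert (He' : 0 < e') by (apply Rmin_glb_lt; [lra | apply Rinv_0_lt_compat; lra]).
    assert (He'e : e' <= e) by apply Rmin_l.
    exists e'; split; [lra |]; intros k [<- | Hkl].
    + assert (H : e' <= / (2 * (Rabs k0 + 1))) by apply Rmin_r.
      apply (Rmult_le_compat_r (2 * (Rabs k0 + 1))) in H; [| lra].
      rewrite Rinv_l in H by lra; nra.
    + assert (H := Hl k Hkl); assert (Hk' := Rabs_pos k); nra.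
Qed.

Definition approx (e k x x0 : R) : Prop := Rabs (x - x0) <= e * k.

Lemma approx_const e c : 0 <= e -> approx e 0 c c.
Proof. intros; unfold approx; rewrite Rminus_diag, Rabs_R0; lra. Qed.

Lemma approx_add e k1 k2 x x0 y y0 :
  approx e k1 x x0 -> approx e k2 y y0 -> approx e (k1 + k2) (x + y) (x0 + y0).
Proof.
  unfold approx; intros H1 H2.
  replace (x + y - (x0 + y0)) with ((x - x0) + (y - y0)) by ring.
  eapply Rle_trans; [apply Rabs_triang | lra].
Qed.

Lemma approx_opp e k x x0 : approx e k x x0 -> approx e k (- x) (- x0).
Proof.
  unfold approx; intros H; replace (- x - - x0) with (- (x - x0)) by ring.
  rewrite Rabs_Ropp; exact H.
Qed.

Lemma approx_mul e k1 k2 x x0 y y0 : 0 <= e <= 1 -> approx e k1 x x0 -> approx e k2 y y0 ->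
  approx e (k1 * Rabs y0 + Rabs x0 * k2 + k1 * k2) (x * y) (x0 * y0).
Proof.
  unfold approx; intros He H1 H2.
  replace (x * y - x0 * y0) with ((x - x0) * y0 + x0 * (y - y0) + (x - x0) * (y - y0)) by ring.
  assert (A1 := Rabs_pos (x - x0)); assert (A2 := Rabs_pos (y - y0)).
  assert (B1 := Rabs_pos x0); assert (B2 := Rabs_pos y0).
  eapply Rle_trans; [apply Rabs_triang |].
  eapply Rle_trans; [apply Rplus_le_compat_r; apply Rabs_triang |].
  rewrite !Rabs_mult.
  assert (Rabs (x - x0) * Rabs y0 <= e * k1 * Rabs y0) by (apply Rmult_le_compat_r; lra).
  assert (Rabs x0 * Rabs (y - y0) <= Rabs x0 * (e * k2)) by (apply Rmult_le_compat_l; lra).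
  assert (Rabs (x - x0) * Rabs (y - y0) <= e * k1 * (e * k2)) by (apply Rmult_le_compat; lra).
  assert (e * k1 * (e * k2) <= e * (k1 * k2)).
  { destruct (Req_dec e 0) as [-> |]; [rewrite !Rmult_0_l; lra |].
    assert (0 <= k1) by (assert (0 <= e * k1) by lra; nra).
    assert (0 <= k2) by (assert (0 <= e * k2) by lra; nra).
    assert (0 <= e * (k1 * k2)) by (apply Rmult_le_pos; [lra | apply Rmult_le_pos; lra]).
    replace (e * k1 * (e * k2)) with (e * (e * (k1 * k2))) by ring.
    assert (e * (e * (k1 * k2)) <= 1 * (e * (k1 * k2))) by (apply Rmult_le_compat_r; lra).
    lra. }
  nra.
Qed.

Lemma approx_of_abs e x x0 : Rabs (x - x0) <= e -> approx e 1 x x0.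
Proof. unfold approx; lra. Qed.

Lemma approx_det e a b c d a0 b0 c0 d0 : 0 <= e <= 1 ->
  approx e 1 a a0 -> approx e 1 b b0 -> approx e 1 c c0 -> approx e 1 d d0 ->
  approx e (Rabs a0 + Rabs b0 + Rabs c0 + Rabs d0 + 2) (a * b - c * d) (a0 * b0 - c0 * d0).
Proof.
  intros He Ha Hb Hc Hd; unfold Rminus.
  replace (Rabs a0 + Rabs b0 + Rabs c0 + Rabs d0 + 2) with
    ((1 * Rabs b0 + Rabs a0 * 1 + 1 * 1) + (1 * Rabs d0 + Rabs c0 * 1 + 1 * 1)) by ring.
  apply approx_add; [| apply approx_opp]; apply approx_mul; assumption.
Qed.

Definition box (p q : R * R) (r : R) : Prop :=
  Rabs (fst q - fst p) < r /\ Rabs (snd q - snd p) < r.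

Lemma box_mono p q r r' : box p q r -> r <= r' -> box p q r'.
Proof. unfold box; intros [] ?; split; lra. Qed.

Lemma box_center p r : 0 < r -> box p p r.
Proof. intros Hr; split; rewrite Rminus_diag, Rabs_R0; exact Hr. Qed.

Lemma box_swap p q r : box p q r -> box (snd p, fst p) (snd q, fst q) r.
Proof. intros [H1 H2]; split; assumption. Qed.

Lemma dist2_ge_x p q : Rabs (fst p - fst q) <= dist2 p q.
Proof.
  unfold dist2; rewrite <- sqrt_pow2 with (x := Rabs (fst p - fst q)) by apply Rabs_pos.
  apply sqrt_le_1_alt; rewrite pow2_abs.
  assert (0 <= (snd p - snd q) ^ 2) by apply pow2_ge_0; lra.
Qed.

Lemma dist2_ge_y p q : Rabs (snd p - snd q) <= dist2 p q.
Proof.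
  unfold dist2; rewrite <- sqrt_pow2 with (x := Rabs (snd p - snd q)) by apply Rabs_pos.
  apply sqrt_le_1_alt; rewrite pow2_abs.
  assert (0 <= (fst p - fst q) ^ 2) by apply pow2_ge_0; lra.
Qed.

Lemma dist2_le p q : dist2 p q <= Rabs (fst p - fst q) + Rabs (snd p - snd q).
Proof.
  unfold dist2.
  assert (0 <= Rabs (fst p - fst q)) by apply Rabs_pos.
  assert (0 <= Rabs (snd p - snd q)) by apply Rabs_pos.
  rewrite <- sqrt_pow2 with (x := Rabs (fst p - fst q) + Rabs (snd p - snd q)) by lra.
  apply sqrt_le_1_alt.
  rewrite <- (pow2_abs (fst p - fst q)), <- (pow2_abs (snd p - snd q)); nra.
Qed.

Lemma dist2_eq0 p q : dist2 p q = 0 -> p = q.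
Proof.
  intros H; assert (H1 := dist2_ge_x p q); assert (H2 := dist2_ge_y p q).
  rewrite H in H1, H2.
  assert (Ex : Rabs (fst p - fst q) = 0) by (assert (H3 := Rabs_pos (fst p - fst q)); lra).
  assert (Ey : Rabs (snd p - snd q) = 0) by (assert (H3 := Rabs_pos (snd p - snd q)); lra).
  apply Rabs_eq_0 in Ex; apply Rabs_eq_0 in Ey.
  destruct p, q; simpl in *; f_equal; lra.
Qed.

Lemma box_of_dist2 p q r : dist2 q p < r -> box p q r.
Proof.
  intros H; split; eapply Rle_lt_trans; [apply dist2_ge_x | exact H | apply dist2_ge_y | exact H].
Qed.

Lemma open_rectangle x0 y0 r1 r2 :
  open (fun q : R * R => Rabs (fst q - x0) < r1 /\ Rabs (snd q - y0) < r2).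
Proof.
  intros [qx qy] [H1 H2]; simpl in H1, H2.
  assert (Hp : 0 < Rmin (r1 - Rabs (qx - x0)) (r2 - Rabs (qy - y0))) by (apply Rmin_glb_lt; lra).
  exists (mkposreal _ Hp); intros [qx' qy'] [B1 B2]; simpl in B1, B2 |- *.
  assert (Rabs (qx' - qx) < r1 - Rabs (qx - x0)) by (eapply Rlt_le_trans; [exact B1 | apply Rmin_l]).
  assert (Rabs (qy' - qy) < r2 - Rabs (qy - y0)) by (eapply Rlt_le_trans; [exact B2 | apply Rmin_r]).
  split.
  - replace (qx' - x0) with ((qx' - qx) + (qx - x0)) by ring.
    eapply Rle_lt_trans; [apply Rabs_triang | lra].
  - replace (qy' - y0) with ((qy' - qy) + (qy - y0)) by ring.
    eapply Rle_lt_trans; [apply Rabs_triang | lra].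
Qed.

Lemma continuous_box (f : R * R -> R) p eps : continuous f p -> 0 < eps ->
  exists d, 0 < d /\ forall q, box p q d -> Rabs (f q - f p) <= eps.
Proof.
  intros H Heps; apply filterlim_locally with (eps := mkposreal eps Heps) in H.
  destruct H as [d Hd]; exists d; split; [apply cond_pos |].
  intros q Hq; left; exact (Hd q Hq).
Qed.

Lemma continuous_box_all (l : list (R * R -> R)) p eps : 0 < eps ->
  (forall f, In f l -> continuous f p) ->
  exists d, 0 < d /\ forall q, box p q d -> forall f, In f l -> Rabs (f q - f p) <= eps.
Proof.
  intros Heps; induction l as [|f0 l IH]; intros Hl.
  - exists 1; split; [lra |]; intros q _ f [].
  - destruct IH as [d [Hd Hq]]; [intros f Hf; apply Hl; right; exact Hf |].
    destruct (continuous_box f0 p eps (Hl f0 (or_introl eq_refl)) Heps) as [d0 [Hd0 Hq0]].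
    exists (Rmin d d0); split; [apply Rmin_glb_lt; assumption |].
    intros q Hb f [<- | Hf].
    + apply Hq0; eapply box_mono; [exact Hb | apply Rmin_r].
    + apply Hq; [eapply box_mono; [exact Hb | apply Rmin_l] | exact Hf].
Qed.

Lemma continuous_R_intro (f : R -> R) x :
  (forall eps, 0 < eps -> exists d, 0 < d /\ forall t, Rabs (t - x) < d -> Rabs (f t - f x) < eps) ->
  continuous f x.
Proof.
  intros H; apply filterlim_locally; intros eps.
  destruct (H eps (cond_pos eps)) as [d [Hd H']].
  exists (mkposreal d Hd); intros t Ht; exact (H' t Ht).
Qed.

Lemma continuous_R_elim (f : R -> R) x : continuous f x ->
  forall eps, 0 < eps -> exists d, 0 < d /\ forall t, Rabs (t - x) < d -> Rabs (f t - f x) < eps.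
Proof.
  intros H eps Heps; apply filterlim_locally with (eps := mkposreal eps Heps) in H.
  destruct H as [d Hd]; exists d; split; [apply cond_pos |]; intros t Ht; exact (Hd t Ht).
Qed.

Lemma continuous_swap (f : R * R -> R) p :
  continuous f (snd p, fst p) -> continuous (fun q => f (snd q, fst q)) p.
Proof.
  intros Hf; apply (continuous_comp (fun q : R * R => (snd q, fst q)) f); [| exact Hf].
  intros P [eps HP]; exists eps; intros q [H1 H2]; apply HP; split; assumption.
Qed.

(** * Mean value theorem on boxes *)

Definition betw (a b c : R) : Prop := Rmin a b <= c <= Rmax a b.

Lemma betw_close a b c x0 r :
  betw a b c -> Rabs (a - x0) < r -> Rabs (b - x0) < r -> Rabs (c - x0) < r.
Proof.
  unfold betw, Rmin, Rmax; destruct (Rle_dec a b); intros [] H1 H2;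
    apply Rabs_def2 in H1; apply Rabs_def2 in H2; apply Rabs_def1; lra.
Qed.

Lemma betw_right a b : betw a b b.
Proof. split; [apply Rmin_r | apply Rmax_r]. Qed.

Lemma betw_le a b c : betw a b c -> Rabs (c - a) <= Rabs (b - a).
Proof.
  unfold betw, Rmin, Rmax; destruct (Rle_dec a b); intros [];
    unfold Rabs; repeat destruct Rcase_abs; lra.
Qed.

Lemma is_derive_continuity_pt f c d : is_derive f c d -> continuity_pt f c.
Proof.
  intros H; apply continuity_pt_filterlim; apply (ex_derive_continuous f c); exists d; exact H.
Qed.

Lemma MVT_betw (f df : R -> R) (a b : R) :
  (forall x, betw a b x -> is_derive f x (df x)) ->
  exists c, betw a b c /\ f b - f a = df c * (b - a).
Proof.
  intros H; destruct (MVT_gen f a b df) as [c [Hc E]].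
  - intros x Hx; apply H; unfold betw; lra.
  - intros x Hx; apply (is_derive_continuity_pt _ _ (df x)), H; exact Hx.
  - exists c; split; [exact Hc | exact E].
Qed.

Section Mean_value.
Variables (G Gx Gy : R * R -> R) (p0 : R * R) (r : R).
Hypothesis HGx : forall p, box p0 p r -> is_derive (fun t => G (t, snd p)) (fst p) (Gx p).
Hypothesis HGy : forall p, box p0 p r -> is_derive (fun t => G (fst p, t)) (snd p) (Gy p).

Lemma MVT_x x x' y : Rabs (x - fst p0) < r -> Rabs (x' - fst p0) < r -> Rabs (y - snd p0) < r ->
  exists c, betw x x' c /\ G (x', y) - G (x, y) = Gx (c, y) * (x' - x).
Proof.
  intros H1 H2 H3; apply (MVT_betw (fun t => G (t, y)) (fun t => Gx (t, y))).
  intros c Hc; apply (HGx (c, y)); split; [eapply betw_close; eauto | exact H3].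
Qed.

Lemma MVT_y x y y' : Rabs (x - fst p0) < r -> Rabs (y - snd p0) < r -> Rabs (y' - snd p0) < r ->
  exists c, betw y y' c /\ G (x, y') - G (x, y) = Gy (x, c) * (y' - y).
Proof.
  intros H1 H2 H3; apply (MVT_betw (fun t => G (x, t)) (fun t => Gy (x, t))).
  intros c Hc; apply (HGy (x, c)); split; [exact H1 | eapply betw_close; eauto].
Qed.

Lemma MVT_xy x y : Rabs (x - fst p0) < r -> Rabs (y - snd p0) < r ->
  exists c d, betw (fst p0) x c /\ betw (snd p0) y d /\
    G (x, y) - G p0 = Gx (c, y) * (x - fst p0) + Gy (fst p0, d) * (y - snd p0).
Proof.
  intros H1 H2.
  assert (Hr : 0 < r) by (eapply Rle_lt_trans; [apply Rabs_pos | exact H1]).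
  assert (r0 : Rabs (fst p0 - fst p0) < r) by (rewrite Rminus_diag, Rabs_R0; exact Hr).
  assert (r1 : Rabs (snd p0 - snd p0) < r) by (rewrite Rminus_diag, Rabs_R0; exact Hr).
  destruct (MVT_x (fst p0) x y r0 H1 H2) as [c [Hc Ec]].
  destruct (MVT_y (fst p0) (snd p0) y r0 r1 H2) as [d [Hd Ed]].
  exists c, d; split; [exact Hc | split; [exact Hd |]].
  destruct p0 as [x0 y0]; simpl in *; lra.
Qed.

End Mean_value.

(** * Regular points are isolated zeros *)

Lemma det_neq0_stable a0 b0 c0 d0 : a0 * b0 - c0 * d0 <> 0 ->
  exists e, 0 < e /\ forall a b c d, Rabs (a - a0) <= e -> Rabs (b - b0) <= e ->
    Rabs (c - c0) <= e -> Rabs (d - d0) <= e -> a * b - c * d <> 0.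
Proof.
  intros HD0; set (L := Rabs a0 + Rabs b0 + Rabs c0 + Rabs d0 + 2).
  assert (HD : 0 < Rabs (a0 * b0 - c0 * d0)) by (apply Rabs_pos_lt; exact HD0).
  destruct (exists_small_scale (L / Rabs (a0 * b0 - c0 * d0) :: nil)) as [e [He Hsmall]].
  assert (HeL : e * Rabs L < Rabs (a0 * b0 - c0 * d0)).
  { assert (H := Hsmall _ (or_introl eq_refl)).
    rewrite Rabs_div, Rabs_Rabsolu in H by lra.
    replace (e * Rabs L) with (e * (Rabs L / Rabs (a0 * b0 - c0 * d0)) * Rabs (a0 * b0 - c0 * d0))
      by (field; lra).
    nra. }
  exists e; split; [lra |]; intros a b c d Ha Hb Hc Hd Z.
  assert (H := approx_det e a b c d a0 b0 c0 d0 (conj (Rlt_le _ _ (proj1 He)) (proj2 He))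
    (approx_of_abs _ _ _ Ha) (approx_of_abs _ _ _ Hb) (approx_of_abs _ _ _ Hc) (approx_of_abs _ _ _ Hd)).
  unfold approx in H; rewrite Z, Rminus_0_l, Rabs_Ropp in H.
  assert (e * L <= e * Rabs L) by (apply Rmult_le_compat_l; [lra | apply RRle_abs]).
  fold L in H; lra.
Qed.

Lemma cramer_zero a b c d X Y : a * d - b * c <> 0 ->
  a * X + b * Y = 0 -> c * X + d * Y = 0 -> X = 0 /\ Y = 0.
Proof.
  intros HD H1 H2.
  assert (EX : (a * d - b * c) * X = 0).
  { replace ((a * d - b * c) * X) with (d * (a * X + b * Y) - b * (c * X + d * Y)) by ring.
    rewrite H1, H2; ring. }
  assert (EY : (a * d - b * c) * Y = 0).
  { replace ((a * d - b * c) * Y) with (a * (c * X + d * Y) - c * (a * X + b * Y)) by ring.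
    rewrite H1, H2; ring. }
  apply Rmult_integral in EX; apply Rmult_integral in EY; tauto.
Qed.

(* The mean value theorem applied to G and K along the same two segments gives
   a linear system for q - p0 whose matrix is a perturbation of the Jacobian at p0. *)
Lemma fiber_isolated_of_det_neq0 (G K Gx Gy Kx Ky : R * R -> R) (p0 : R * R) (r : R) :
  0 < r ->
  (forall p, box p0 p r -> is_derive (fun t => G (t, snd p)) (fst p) (Gx p)) ->
  (forall p, box p0 p r -> is_derive (fun t => G (fst p, t)) (snd p) (Gy p)) ->
  (forall p, box p0 p r -> is_derive (fun t => K (t, snd p)) (fst p) (Kx p)) ->
  (forall p, box p0 p r -> is_derive (fun t => K (fst p, t)) (snd p) (Ky p)) ->
  continuous Gx p0 -> continuous Gy p0 -> continuous Kx p0 -> continuous Ky p0 ->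
  Gx p0 * Ky p0 - Gy p0 * Kx p0 <> 0 ->
  exists r', 0 < r' /\ forall q, box p0 q r' -> G q = G p0 -> K q = K p0 -> q = p0.
Proof.
  intros Hr HGx HGy HKx HKy CGx CGy CKx CKy Hdet.
  destruct (det_neq0_stable _ _ _ _ Hdet) as [e [He Hstable]].
  destruct (continuous_box_all (Gx :: Gy :: Kx :: Ky :: nil) p0 e He) as [d [Hd Hc]].
  { intros f Hf; destruct Hf as [<- | [<- | [<- | [<- | []]]]]; assumption. }
  exists (Rmin r d); split; [apply Rmin_glb_lt; assumption |].
  intros [x y] Hq EG EK.
  assert (Hqr : box p0 (x, y) r) by (eapply box_mono; [exact Hq | apply Rmin_l]).
  assert (Hqd : forall q, box p0 q (Rmin r d) -> box p0 q d)
    by (intros; eapply box_mono; [eassumption | apply Rmin_r]).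
  destruct Hqr as [Bx By]; simpl in Bx, By.
  destruct (MVT_xy G Gx Gy p0 r HGx HGy x y Bx By) as [c1 [c2 [Hc1 [Hc2 EqG]]]].
  destruct (MVT_xy K Kx Ky p0 r HKx HKy x y Bx By) as [c3 [c4 [Hc3 [Hc4 EqK]]]].
  rewrite EG, Rminus_diag in EqG; rewrite EK, Rminus_diag in EqK.
  destruct Hq as [Qx Qy]; simpl in Qx, Qy.
  apply betw_le in Hc1; apply betw_le in Hc2; apply betw_le in Hc3; apply betw_le in Hc4.
  assert (Hbox : forall a b, Rabs (a - fst p0) <= Rabs (x - fst p0) ->
      Rabs (b - snd p0) <= Rabs (y - snd p0) -> box p0 (a, b) d).
  { intros a b Ha Hb; apply Hqd; split; simpl; lra. }
  assert (H0 : Rabs (fst p0 - fst p0) <= Rabs (x - fst p0)) by (rewrite Rminus_diag, Rabs_R0; apply Rabs_pos).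
  assert (H1 : Rabs (y - snd p0) <= Rabs (y - snd p0)) by lra.
  set (a := Gx (c1, y)) in *; set (b := Gy (fst p0, c2)) in *.
  set (c := Kx (c3, y)) in *; set (d' := Ky (fst p0, c4)) in *.
  assert (HD : a * d' - b * c <> 0).
  { apply Hstable.
    - apply (Hc _ (Hbox _ _ Hc1 H1) Gx); simpl; tauto.
    - apply (Hc _ (Hbox _ _ H0 Hc4) Ky); simpl; tauto.
    - apply (Hc _ (Hbox _ _ H0 Hc2) Gy); simpl; tauto.
    - apply (Hc _ (Hbox _ _ Hc3 H1) Kx); simpl; tauto. }
  destruct (cramer_zero a b c d' (x - fst p0) (y - snd p0) HD) as [EX EY]; [lra | lra |].
  destruct p0; simpl in *; f_equal; lra.
Qed.

(** * Implicit function theorem *)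

Lemma Rdiv_close A B A0 B0 eps m : 0 < m -> Rabs (A - A0) <= eps -> Rabs (B - B0) <= eps ->
  m <= Rabs B -> m <= Rabs B0 -> Rabs (A / B - A0 / B0) <= eps * (Rabs B0 + Rabs A0) / (m * m).
Proof.
  intros Hm HA HB HmB HmB0.
  assert (B <> 0) by (intro Z; rewrite Z, Rabs_R0 in HmB; lra).
  assert (B0 <> 0) by (intro Z; rewrite Z, Rabs_R0 in HmB0; lra).
  replace (A / B - A0 / B0) with (((A - A0) * B0 - A0 * (B - B0)) / (B * B0)) by (field; auto).
  unfold Rdiv; rewrite Rabs_mult, Rabs_inv, Rabs_mult.
  assert (Hn : Rabs ((A - A0) * B0 - A0 * (B - B0)) <= eps * (Rabs B0 + Rabs A0)).
  { unfold Rminus at 1; eapply Rle_trans; [apply Rabs_triang |]; rewrite Rabs_Ropp, !Rabs_mult.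
    assert (Rabs (A - A0) * Rabs B0 <= eps * Rabs B0) by (apply Rmult_le_compat_r; auto; apply Rabs_pos).
    assert (Rabs A0 * Rabs (B - B0) <= Rabs A0 * eps) by (apply Rmult_le_compat_l; auto; apply Rabs_pos).
    lra. }
  assert (Hd : m * m <= Rabs B * Rabs B0) by (apply Rmult_le_compat; lra).
  apply Rmult_le_compat; auto.
  - apply Rabs_pos.
  - left; apply Rinv_0_lt_compat; nra.
  - apply Rinv_le_contravar; nra.
Qed.

Lemma dominant_term_pos a g1 g2 dx M eta del : a <> 0 -> 0 < M -> 0 < eta ->
  a * g1 >= a * a / 2 -> Rabs g2 <= M -> Rabs dx < del -> del * (2 * M) <= Rabs a * eta ->
  a * (g1 * eta + g2 * dx) > 0.
Proof.
  intros Ha HM He H1 H2 H3 H4.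
  assert (Haa : 0 < Rabs a) by (apply Rabs_pos_lt; auto).
  assert (A1 : Rabs (a * g2 * dx) <= Rabs a * M * Rabs dx).
  { rewrite !Rabs_mult; apply Rmult_le_compat_r; [apply Rabs_pos |]; apply Rmult_le_compat_l; lra. }
  assert (A2 : Rabs a * M * Rabs dx < Rabs a * M * del) by (apply Rmult_lt_compat_l; [nra | lra]).
  assert (A3 : Rabs a * M * del * 2 <= Rabs a * (Rabs a * eta)).
  { replace (Rabs a * M * del * 2) with (Rabs a * (del * (2 * M))) by ring.
    apply Rmult_le_compat_l; lra. }
  assert (A4 : Rabs a * Rabs a = a * a) by (rewrite <- Rabs_mult; apply Rabs_right; nra).
  assert (A5 : a * g2 * dx >= - Rabs (a * g2 * dx)).
  { assert (H := Rabs_Ropp (a * g2 * dx)); assert (H' := RRle_abs (- (a * g2 * dx))); lra. }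
  nra.
Qed.

(* A zero of [G (x, .)] within [eta] of [y0], chosen by [epsilon]; arbitrary if there is none. *)
Definition implicit_branch (G : R * R -> R) (y0 eta x : R) : R :=
  epsilon (inhabits 0) (fun y => Rabs (y - y0) <= eta /\ G (x, y) = 0).

Section Implicit_function.
Variables (G Gx Gy : R * R -> R) (x0 y0 r0 : R).
Local Notation p0 := (x0, y0).
Hypothesis HGx : forall p, box p0 p r0 -> is_derive (fun t => G (t, snd p)) (fst p) (Gx p).
Hypothesis HGy : forall p, box p0 p r0 -> is_derive (fun t => G (fst p, t)) (snd p) (Gy p).
Hypothesis CGx : forall p, box p0 p r0 -> continuous Gx p.
Hypothesis CGy : forall p, box p0 p r0 -> continuous Gy p.
Hypothesis HG0 : G p0 = 0.
Hypothesis Hr0 : 0 < r0.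

Section Implicit_box.
Variables (a M rho eta del : R).
Hypothesis Ha : a <> 0.
Hypothesis HM : 0 < M.
Hypothesis Heta : 0 < eta.
Hypothesis Heta_rho : eta < rho.
Hypothesis Hrho : rho <= r0.
Hypothesis Hdel_eta : del <= eta.
Hypothesis Hdel_M : del * (2 * M) <= Rabs a * eta.
Hypothesis Gy_sign : forall q, box p0 q rho -> a * Gy q >= a * a / 2.
Hypothesis Gx_bound : forall q, box p0 q rho -> Rabs (Gx q) <= M.

Local Notation h := (implicit_branch G y0 eta).

Lemma Gy_away_from_0 q : box p0 q rho -> Rabs a / 2 <= Rabs (Gy q).
Proof.
  intros Hq; assert (H := Gy_sign q Hq).
  unfold Rabs; destruct (Rcase_abs a); destruct (Rcase_abs (Gy q)); nra.
Qed.

Lemma Gy_neq0 q : box p0 q rho -> Gy q <> 0.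
Proof.
  intros Hq Z; assert (H := Gy_away_from_0 q Hq); rewrite Z, Rabs_R0 in H.
  assert (0 < Rabs a) by (apply Rabs_pos_lt; exact Ha); lra.
Qed.

Lemma box_r0 q : box p0 q rho -> box p0 q r0.
Proof. intros Hq; eapply box_mono; [exact Hq | exact Hrho]. Qed.

Lemma G_opposite_signs x : Rabs (x - x0) < del ->
  a * G (x, y0 + eta) > 0 /\ a * G (x, y0 - eta) < 0.
Proof.
  intros Hx.
  assert (Hr : forall z, Rabs (z - y0) <= eta -> Rabs (z - y0) < r0) by (intros; lra).
  assert (Rabs (x0 - x0) = 0) by (rewrite Rminus_diag; apply Rabs_R0).
  assert (Rabs (y0 - y0) = 0) by (rewrite Rminus_diag; apply Rabs_R0).
  assert (Ry1 : Rabs (y0 + eta - y0) = eta) by (replace (y0 + eta - y0) with eta by ring; apply Rabs_right; lra).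
  assert (Ry2 : Rabs (y0 - eta - y0) = eta).
  { replace (y0 - eta - y0) with (- eta) by ring; rewrite Rabs_Ropp; apply Rabs_right; lra. }
  split.
  - destruct (MVT_y G Gy p0 r0 HGy x0 y0 (y0 + eta)) as [c [Hc Ec]]; simpl; try lra.
    destruct (MVT_x G Gx p0 r0 HGx x0 x (y0 + eta)) as [c' [Hc' Ec']]; simpl; try lra.
    apply betw_le in Hc; apply betw_le in Hc'; rewrite Ry1 in Hc.
    replace (G (x, y0 + eta)) with (Gy (x0, c) * eta + Gx (c', y0 + eta) * (x - x0)) by (simpl in HG0; lra).
    apply (dominant_term_pos a _ _ _ M eta del); try assumption.
    + apply Gy_sign; split; simpl; lra.
    + apply Gx_bound; split; simpl; lra.
  - destruct (MVT_y G Gy p0 r0 HGy x0 y0 (y0 - eta)) as [c [Hc Ec]]; simpl; try lra.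
    destruct (MVT_x G Gx p0 r0 HGx x0 x (y0 - eta)) as [c' [Hc' Ec']]; simpl; try lra.
    apply betw_le in Hc; apply betw_le in Hc'; rewrite Ry2 in Hc.
    replace (G (x, y0 - eta)) with (- (Gy (x0, c) * eta + Gx (c', y0 - eta) * (x0 - x))) by (simpl in HG0; lra).
    assert (a * (Gy (x0, c) * eta + Gx (c', y0 - eta) * (x0 - x)) > 0); [| lra].
    apply (dominant_term_pos a _ _ _ M eta del); try assumption.
    + apply Gy_sign; split; simpl; lra.
    + apply Gx_bound; split; simpl; lra.
    + rewrite Rabs_minus_sym; exact Hx.
Qed.

Lemma implicit_branch_spec x : Rabs (x - x0) < del -> Rabs (h x - y0) <= eta /\ G (x, h x) = 0.
Proof.
  intros Hx; unfold implicit_branch; apply epsilon_spec.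
  destruct (G_opposite_signs x Hx) as [S1 S2].
  destruct (Ranalysis5.IVT_interv (fun y => a * G (x, y)) (y0 - eta) (y0 + eta)) as [z [Hz Ez]].
  - intros c Hc; apply (is_derive_continuity_pt _ _ (a * Gy (x, c))), is_derive_scal.
    apply (HGy (x, c)); split; simpl; [lra | apply Rabs_def1; lra].
  - lra.
  - exact S2.
  - exact S1.
  - exists z; split; [apply Rabs_le; lra |].
    apply Rmult_integral in Ez; destruct Ez; [contradiction | assumption].
Qed.

Lemma implicit_zero_unique x y1 y2 : Rabs (x - x0) < rho -> Rabs (y1 - y0) < rho ->
  Rabs (y2 - y0) < rho -> G (x, y1) = 0 -> G (x, y2) = 0 -> y1 = y2.
Proof.
  intros Hx H1 H2 E1 E2.
  destruct (MVT_y G Gy p0 r0 HGy x y1 y2) as [c [Hc Ec]]; simpl; try lra.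
  assert (Hnz : Gy (x, c) <> 0) by (apply Gy_neq0; split; simpl; [lra | eapply betw_close; eauto]).
  rewrite E1, E2 in Ec.
  assert (Gy (x, c) * (y2 - y1) = 0) by lra.
  apply Rmult_integral in H; destruct H; [contradiction | lra].
Qed.

Lemma implicit_branch_box x : Rabs (x - x0) < del -> box p0 (x, h x) rho.
Proof. intros Hx; destruct (implicit_branch_spec x Hx); split; simpl; lra. Qed.

Lemma implicit_branch_increment x x' : Rabs (x - x0) < del -> Rabs (x' - x0) < del ->
  exists c d, betw x x' c /\ betw (h x) (h x') d /\
    Gy (x, d) * (h x' - h x) = - (Gx (c, h x') * (x' - x)) /\
    box p0 (c, h x') rho /\ box p0 (x, d) rho.
Proof.
  intros Hx Hx'.
  destruct (implicit_branch_spec x Hx) as [S1 S2]; destruct (implicit_branch_spec x' Hx') as [S3 S4].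
  destruct (MVT_x G Gx p0 r0 HGx x x' (h x')) as [c [Hc Ec]]; simpl; try lra.
  destruct (MVT_y G Gy p0 r0 HGy x (h x) (h x')) as [d [Hd Ed]]; simpl; try lra.
  exists c, d; split; [exact Hc |]; split; [exact Hd |]; split; [lra |].
  split; split; simpl.
  - eapply betw_close; [exact Hc | lra | lra].
  - lra.
  - lra.
  - eapply betw_close; [exact Hd | lra | lra].
Qed.

Lemma implicit_branch_lipschitz x x' : Rabs (x - x0) < del -> Rabs (x' - x0) < del ->
  Rabs (h x' - h x) <= 2 * M / Rabs a * Rabs (x' - x).
Proof.
  intros Hx Hx'.
  destruct (implicit_branch_increment x x' Hx Hx') as [c [d [_ [_ [Ed [B2 B1]]]]]].
  assert (G1 := Gy_away_from_0 _ B1); assert (G2 := Gx_bound _ B2).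
  assert (Haa : 0 < Rabs a) by (apply Rabs_pos_lt; exact Ha).
  assert (E2 : Rabs (Gy (x, d)) * Rabs (h x' - h x) = Rabs (Gx (c, h x')) * Rabs (x' - x)).
  { rewrite <- !Rabs_mult, Ed, Rabs_Ropp; reflexivity. }
  assert (0 <= Rabs (h x' - h x)) by apply Rabs_pos; assert (0 <= Rabs (x' - x)) by apply Rabs_pos.
  assert (E3 : Rabs a / 2 * Rabs (h x' - h x) <= M * Rabs (x' - x)).
  { assert (Rabs a / 2 * Rabs (h x' - h x) <= Rabs (Gy (x, d)) * Rabs (h x' - h x))
      by (apply Rmult_le_compat_r; lra).
    assert (Rabs (Gx (c, h x')) * Rabs (x' - x) <= M * Rabs (x' - x)) by (apply Rmult_le_compat_r; lra).
    lra. }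
  unfold Rdiv.
  replace (Rabs (h x' - h x)) with ((Rabs a / 2 * Rabs (h x' - h x)) * (2 / Rabs a)) by (field; lra).
  replace (2 * M * / Rabs a * Rabs (x' - x)) with ((M * Rabs (x' - x)) * (2 / Rabs a)) by (field; lra).
  apply Rmult_le_compat_r; [| exact E3].
  unfold Rdiv; apply Rmult_le_pos; [lra | left; apply Rinv_0_lt_compat; lra].
Qed.

Lemma slope_continuity x : Rabs (x - x0) < del -> forall eps, 0 < eps -> exists dd, 0 < dd /\
  forall p q, box (x, h x) p dd -> box (x, h x) q dd -> box p0 q rho ->
    Rabs (Gx p / Gy q - Gx (x, h x) / Gy (x, h x)) < eps.
Proof.
  intros Hx eps Heps; assert (Bx0 := implicit_branch_box x Hx).
  set (A0 := Gx (x, h x)); set (B0 := Gy (x, h x)); set (m := Rabs a / 2).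
  assert (Hm : 0 < m) by (unfold m; assert (0 < Rabs a) by (apply Rabs_pos_lt; exact Ha); lra).
  assert (HB0 : m <= Rabs B0) by (apply Gy_away_from_0; exact Bx0).
  assert (HA0 : 0 <= Rabs A0) by apply Rabs_pos.
  set (eps' := eps * (m * m) / (Rabs B0 + Rabs A0 + 1)).
  assert (Heps' : 0 < eps').
  { unfold eps', Rdiv; apply Rmult_lt_0_compat; [apply Rmult_lt_0_compat; nra | apply Rinv_0_lt_compat; lra]. }
  destruct (continuous_box Gx (x, h x) eps' (CGx _ (box_r0 _ Bx0)) Heps') as [da [Hda Ea]].
  destruct (continuous_box Gy (x, h x) eps' (CGy _ (box_r0 _ Bx0)) Heps') as [db [Hdb Eb]].
  exists (Rmin da db); split; [apply Rmin_glb_lt; assumption |].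
  intros p q Hp Hq Hq0.
  assert (Ha1 : Rabs (Gx p - A0) <= eps') by (apply Ea; eapply box_mono; [exact Hp | apply Rmin_l]).
  assert (Hb1 : Rabs (Gy q - B0) <= eps') by (apply Eb; eapply box_mono; [exact Hq | apply Rmin_r]).
  assert (Hq1 : m <= Rabs (Gy q)) by (apply Gy_away_from_0; exact Hq0).
  eapply Rle_lt_trans; [apply (Rdiv_close _ _ _ _ eps' m); assumption |].
  unfold eps'.
  replace (eps * (m * m) / (Rabs B0 + Rabs A0 + 1) * (Rabs B0 + Rabs A0) / (m * m)) with
    (eps * ((Rabs B0 + Rabs A0) / (Rabs B0 + Rabs A0 + 1))) by (field; lra).
  assert ((Rabs B0 + Rabs A0) / (Rabs B0 + Rabs A0 + 1) < 1).
  { apply (Rmult_lt_reg_r (Rabs B0 + Rabs A0 + 1)); [lra |].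
    unfold Rdiv; rewrite Rmult_assoc, Rinv_l; lra. }
  assert (0 <= (Rabs B0 + Rabs A0) / (Rabs B0 + Rabs A0 + 1)).
  { unfold Rdiv; apply Rmult_le_pos; [lra | left; apply Rinv_0_lt_compat; lra]. }
  rewrite <- (Rmult_1_r eps) at 2; apply Rmult_lt_compat_l; lra.
Qed.

Lemma implicit_branch_local x : Rabs (x - x0) < del -> forall dd, 0 < dd -> exists dl, 0 < dl /\
  forall t, Rabs (t - x) < dl -> Rabs (t - x0) < del /\
    forall c d, betw x t c -> betw (h x) (h t) d ->
      box (x, h x) (c, h t) dd /\ box (x, h x) (x, d) dd.
Proof.
  intros Hx dd Hdd; set (Lc := 2 * M / Rabs a).
  assert (HLc : 0 <= Lc).
  { unfold Lc, Rdiv; apply Rmult_le_pos; [lra | left; apply Rinv_0_lt_compat, Rabs_pos_lt; exact Ha]. }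
  exists (Rmin (del - Rabs (x - x0)) (dd / (1 + Lc))); split.
  { apply Rmin_glb_lt; [lra | apply Rdiv_lt_0_compat; lra]. }
  intros t Ht.
  assert (Ht1 : Rabs (t - x) < del - Rabs (x - x0)) by (eapply Rlt_le_trans; [exact Ht | apply Rmin_l]).
  assert (Ht2 : Rabs (t - x) * (1 + Lc) < dd).
  { assert (H : Rabs (t - x) < dd / (1 + Lc)) by (eapply Rlt_le_trans; [exact Ht | apply Rmin_r]).
    apply (Rmult_lt_compat_r (1 + Lc)) in H; [| lra].
    unfold Rdiv in H; rewrite Rmult_assoc, Rinv_l in H; lra. }
  assert (Ht0 : Rabs (t - x0) < del).
  { replace (t - x0) with ((t - x) + (x - x0)) by ring; eapply Rle_lt_trans; [apply Rabs_triang | lra]. }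
  assert (Hl := implicit_branch_lipschitz x t Hx Ht0); fold Lc in Hl.
  assert (0 <= Rabs (t - x) * Lc) by (apply Rmult_le_pos; [apply Rabs_pos | exact HLc]).
  split; [exact Ht0 |]; intros c d Hc Hd.
  apply betw_le in Hc; apply betw_le in Hd.
  split; split; simpl; [lra | clearbody Lc; nra | rewrite Rminus_diag, Rabs_R0; exact Hdd | clearbody Lc; nra].
Qed.

Lemma implicit_branch_derive x : Rabs (x - x0) < del ->
  is_derive h x (- (Gx (x, h x) / Gy (x, h x))).
Proof.
  intros Hx; apply is_derive_Reals; intros eps Heps.
  destruct (slope_continuity x Hx eps Heps) as [dd [Hdd Edd]].
  destruct (implicit_branch_local x Hx dd Hdd) as [dl [Hdl Hloc]].
  exists (mkposreal dl Hdl); intros hh Hh0 Hhh; simpl in Hhh.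
  assert (Hxt : Rabs (x + hh - x) < dl) by (replace (x + hh - x) with hh by ring; exact Hhh).
  destruct (Hloc _ Hxt) as [Hx' Hbox].
  destruct (implicit_branch_increment x (x + hh) Hx Hx') as [c [d [Hc [Hd [Ed [Bp0 Bq0]]]]]].
  destruct (Hbox c d Hc Hd) as [Bp Bq].
  specialize (Edd _ _ Bp Bq Bq0).
  assert (Gy (x, d) <> 0) by (apply Gy_neq0; exact Bq0).
  assert (Gy (x, h x) <> 0) by (apply Gy_neq0, implicit_branch_box; exact Hx).
  replace (x + hh - x) with hh in Ed by ring.
  replace ((h (x + hh) - h x) / hh - - (Gx (x, h x) / Gy (x, h x))) with
    (- (Gx (c, h (x + hh)) / Gy (x, d) - Gx (x, h x) / Gy (x, h x))).
  - rewrite Rabs_Ropp; exact Edd.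
  - assert (Eh : h (x + hh) - h x = - (Gx (c, h (x + hh)) * hh) / Gy (x, d)) by (rewrite <- Ed; field; auto).
    rewrite Eh; field; auto.
Qed.

Lemma implicit_branch_continuous_derive x : Rabs (x - x0) < del -> continuous (Derive h) x.
Proof.
  intros Hx; apply (continuous_ext_loc _ (fun t => - (Gx (t, h t) / Gy (t, h t)))).
  - exists (mkposreal (del - Rabs (x - x0)) ltac:(lra)); intros t Ht; simpl in Ht.
    symmetry; apply is_derive_unique, implicit_branch_derive.
    replace (t - x0) with ((t - x) + (x - x0)) by ring.
    eapply Rle_lt_trans; [apply Rabs_triang |]; change (Rabs (t - x) < del - Rabs (x - x0)) in Ht; lra.
  - apply continuous_R_intro; intros eps Heps.
    destruct (slope_continuity x Hx eps Heps) as [dd [Hdd Edd]].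
    destruct (implicit_branch_local x Hx dd Hdd) as [dl [Hdl Hloc]].
    exists dl; split; [exact Hdl |]; intros t Ht; cbv beta.
    destruct (Hloc t Ht) as [Ht0 Hbox].
    destruct (Hbox t (h t) (betw_right x t) (betw_right (h x) (h t))) as [Bp _].
    specialize (Edd _ _ Bp Bp (implicit_branch_box t Ht0)).
    change (Rabs (- (Gx (t, h t) / Gy (t, h t)) - - (Gx (x, h x) / Gy (x, h x))) < eps).
    eapply Rle_lt_trans; [| exact Edd]; right; rewrite <- Rabs_Ropp; f_equal; ring.
Qed.

End Implicit_box.

Theorem implicit_function r : Gy p0 <> 0 -> 0 < r -> exists del rho (h : R -> R),
  0 < del /\ del <= rho /\ rho <= r /\ rho <= r0 /\
  (forall x, Rabs (x - x0) < del -> Rabs (h x - y0) < rho /\ G (x, h x) = 0) /\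
  (forall x y, Rabs (x - x0) < del -> Rabs (y - y0) < rho -> G (x, y) = 0 -> y = h x) /\
  (forall x, Rabs (x - x0) < del ->
     is_derive h x (- (Gx (x, h x) / Gy (x, h x))) /\ continuous (Derive h) x).
Proof.
  intros Ha Hr; set (a := Gy p0) in *.
  assert (Haa : 0 < Rabs a) by (apply Rabs_pos_lt; exact Ha).
  set (e := Rmin 1 (Rabs a / 2)).
  assert (He : 0 < e) by (apply Rmin_glb_lt; lra).
  assert (He1 : e <= 1) by apply Rmin_l; assert (He2 : e <= Rabs a / 2) by apply Rmin_r.
  destruct (continuous_box_all (Gx :: Gy :: nil) p0 e He) as [dc [Hdc Hc]].
  { intros f [<- | [<- | []]]; [apply CGx | apply CGy]; apply box_center; exact Hr0. }
  set (rho := Rmin r (Rmin r0 dc)).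
  assert (Hrho : 0 < rho) by (repeat apply Rmin_glb_lt; assumption).
  assert (Hrho_r : rho <= r) by apply Rmin_l.
  assert (Hrho_r0 : rho <= r0) by (eapply Rle_trans; [apply Rmin_r | apply Rmin_l]).
  assert (Hrho_dc : rho <= dc) by (eapply Rle_trans; [apply Rmin_r | apply Rmin_r]).
  set (M := Rabs (Gx p0) + 1); assert (HM : 0 < M) by (unfold M; assert (H := Rabs_pos (Gx p0)); lra).
  set (eta := rho / 2).
  set (del := Rmin eta (Rabs a * eta / (2 * M))).
  assert (Hdel : 0 < del).
  { apply Rmin_glb_lt; [unfold eta; lra | apply Rdiv_lt_0_compat; [unfold eta; nra | lra]]. }
  assert (Hdel_eta : del <= eta) by apply Rmin_l.
  assert (Hdel_M : del * (2 * M) <= Rabs a * eta).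
  { assert (H : del <= Rabs a * eta / (2 * M)) by apply Rmin_r.
    apply (Rmult_le_compat_r (2 * M)) in H; [| lra].
    unfold Rdiv in H; rewrite Rmult_assoc, Rinv_l in H; lra. }
  assert (Hnear : forall f q, In f (Gx :: Gy :: nil) -> box p0 q rho -> Rabs (f q - f p0) <= e).
  { intros f q Hf Hq; apply Hc; [eapply box_mono; [exact Hq | exact Hrho_dc] | exact Hf]. }
  assert (Gy_sign : forall q, box p0 q rho -> a * Gy q >= a * a / 2).
  { intros q Hq; apply (near_keeps_sign a (Gy q) e); [exact (Hnear Gy q ltac:(simpl; tauto) Hq) | exact He2]. }
  assert (Gx_bound : forall q, box p0 q rho -> Rabs (Gx q) <= M).
  { intros q Hq; apply (abs_bound_of_near _ _ e); [exact (Hnear Gx q ltac:(simpl; tauto) Hq) | exact He1]. }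
  assert (Heta : 0 < eta) by (unfold eta; lra); assert (Heta_rho : eta < rho) by (unfold eta; lra).
  assert (Hspec := implicit_branch_spec a M rho eta del Ha HM Heta Heta_rho Hrho_r0 Hdel_eta Hdel_M
    Gy_sign Gx_bound).
  exists del, rho, (implicit_branch G y0 eta).
  split; [exact Hdel |]; split; [lra |]; split; [exact Hrho_r |]; split; [exact Hrho_r0 |].
  split; [| split].
  - intros x Hx; destruct (Hspec x Hx); split; [lra | assumption].
  - intros x y Hx Hy Gxy; destruct (Hspec x Hx).
    apply (implicit_zero_unique a rho Ha Hrho_r0 Gy_sign x); try assumption; lra.
  - intros x Hx; split.
    + apply (implicit_branch_derive a M rho eta del); assumption.
    + apply (implicit_branch_continuous_derive a M rho eta del); assumption.
Qed.

End Implicit_function.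

(** * Vanishing of the second component *)

Definition quad (c1 c2 c3 g k : R) : R := c1 * (g * g) + c2 * (g * k) + c3 * (k * k).

Lemma quad_scale c1 c2 c3 g k t : quad c1 c2 c3 (t * g) (t * k) = t ^ 2 * quad c1 c2 c3 g k.
Proof. unfold quad; ring. Qed.

Lemma approx_quad_shift : exists L, forall e lam c1 c2 c3 A B c10 c20 c30 A0 B0, 0 <= e <= 1 ->
  approx e 1 c1 c10 -> approx e 1 c2 c20 -> approx e 1 c3 c30 -> approx e 1 A A0 -> approx e 1 B B0 ->
  approx e (L lam c10 c20 c30 A0 B0)
    (quad c1 c2 c3 (A * lam) (1 + B * lam)) (quad c10 c20 c30 (A0 * lam) (1 + B0 * lam)).
Proof.
  eexists; intros e lam c1 c2 c3 A B c10 c20 c30 A0 B0 He H1 H2 H3 H4 H5; unfold quad.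
  repeat first [eassumption | apply approx_const; lra | eapply approx_add | eapply approx_mul].
Qed.

Lemma approx_lower_bound e L x x0 : 0 <= e -> approx e L x x0 -> x0 - e * Rabs L <= x.
Proof.
  unfold approx; intros He H; apply Rabs_le_bounds in H.
  assert (e * L <= e * Rabs L) by (apply Rmult_le_compat_l; [exact He | apply RRle_abs]); lra.
Qed.

Lemma curvature_growth_absurd phi X P C W eL : 0 < phi -> 0 <= X -> 1/2 <= P -> 0 <= C -> 0 <= W ->
  phi <= eL * X -> phi ^ 2 * P * X <= C * (phi ^ 3 * W) -> 2 * C * W * eL <= 1/2 -> False.
Proof.
  intros Hu HX HP HC HW Hue H1 H2.
  assert (A1 : phi ^ 2 * ((1/2) * X) <= phi ^ 2 * (C * phi * W)).
  { assert (phi ^ 2 * ((1/2) * X) <= phi ^ 2 * P * X)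
      by (assert (0 <= phi ^ 2 * X) by (apply Rmult_le_pos; [apply pow_le |]; lra); nra).
    replace (phi ^ 2 * (C * phi * W)) with (C * (phi ^ 3 * W)) by ring; lra. }
  assert (A2 : (1/2) * X <= C * phi * W)
    by (apply Rmult_le_reg_l with (r := phi ^ 2); [apply pow_lt; lra | exact A1]).
  assert (A3 : C * phi * W <= C * (eL * X) * W)
    by (apply Rmult_le_compat_r; [lra |]; apply Rmult_le_compat_l; lra).
  assert (A4 : (2 * C * W * eL) * X <= (1/2) * X) by (apply Rmult_le_compat_r; lra).
  assert (X = 0) by nra; subst X; lra.
Qed.

Lemma sqrt_cube_le g k phi W : 1 <= W -> g ^ 2 + k ^ 2 <= phi ^ 2 * W ->
  sqrt (g ^ 2 + k ^ 2) ^ 3 <= Rabs phi ^ 3 * (W * sqrt W).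
Proof.
  intros HW H.
  assert (S1 : sqrt (g ^ 2 + k ^ 2) <= Rabs phi * sqrt W).
  { rewrite <- (sqrt_pow2 (Rabs phi)) by apply Rabs_pos.
    rewrite <- sqrt_mult_alt by apply pow2_ge_0; apply sqrt_le_1_alt; rewrite pow2_abs; exact H. }
  replace (Rabs phi ^ 3 * (W * sqrt W)) with ((Rabs phi * sqrt W) ^ 3).
  - apply pow_incr; split; [apply sqrt_pos | exact S1].
  - assert (Sw : sqrt W * sqrt W = W) by (apply sqrt_sqrt; lra).
    replace ((Rabs phi * sqrt W) ^ 3) with (Rabs phi ^ 3 * (sqrt W * sqrt W) * sqrt W) by ring.
    rewrite Sw; ring.
Qed.

Lemma quad_shift_centre c1 c2 c3 a b : quad c1 c2 c3 a b = 0 -> c2 * a + 2 * c3 * b <> 0 ->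
  let lam := (1 - c3) / (c2 * a + 2 * c3 * b) in quad c1 c2 c3 (a * lam) (1 + b * lam) = 1.
Proof.
  intros HD HE lam.
  replace (quad c1 c2 c3 (a * lam) (1 + b * lam))
    with (lam ^ 2 * quad c1 c2 c3 a b + lam * (c2 * a + 2 * c3 * b) + c3) by (unfold quad; ring).
  rewrite HD; unfold lam; field; exact HE.
Qed.

Lemma quad_shift_ge_half : exists L, forall e lam c1 c2 c3 A B c10 c20 c30 A0 B0,
  0 <= e <= 1 -> e * Rabs (L lam c10 c20 c30 A0 B0) <= 1/2 ->
  quad c10 c20 c30 (A0 * lam) (1 + B0 * lam) = 1 ->
  Rabs (c1 - c10) <= e -> Rabs (c2 - c20) <= e -> Rabs (c3 - c30) <= e ->
  Rabs (A - A0) <= e -> Rabs (B - B0) <= e ->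
  1/2 <= quad c1 c2 c3 (A * lam) (1 + B * lam).
Proof.
  destruct approx_quad_shift as [L HL]; exists L.
  intros e lam c1 c2 c3 A B c10 c20 c30 A0 B0 He HeL Hc H1 H2 H3 HA HB.
  assert (H := HL e lam c1 c2 c3 A B c10 c20 c30 A0 B0 He (approx_of_abs _ _ _ H1)
    (approx_of_abs _ _ _ H2) (approx_of_abs _ _ _ H3) (approx_of_abs _ _ _ HA) (approx_of_abs _ _ _ HB)).
  apply approx_lower_bound in H; [rewrite Hc in H; lra | lra].
Qed.

Lemma shift_norm_bound A B a b lam e : Rabs (A - a) <= e -> Rabs (B - b) <= e -> e <= 1 ->
  (A * lam) ^ 2 + (1 + B * lam) ^ 2 <= ((Rabs a + 1) * Rabs lam) ^ 2 + (1 + (Rabs b + 1) * Rabs lam) ^ 2.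
Proof.
  intros HA HB He.
  apply abs_bound_of_near in HA; [| exact He]; apply abs_bound_of_near in HB; [| exact He].
  apply Rplus_le_compat; apply pow_maj_Rabs.
  - rewrite Rabs_mult; apply Rmult_le_compat_r; [apply Rabs_pos | exact HA].
  - eapply Rle_trans; [apply Rabs_triang |]; rewrite Rabs_R1, Rabs_mult.
    apply Rplus_le_compat_l, Rmult_le_compat_r; [apply Rabs_pos | exact HB].
Qed.

Section Vanishing.
Variables (G K Gx Gy Kx Ky c1 c2 c3 : R * R -> R) (x0 y0 r0 C : R).
Local Notation p0 := (x0, y0).
Hypothesis HGx : forall p, box p0 p r0 -> is_derive (fun t => G (t, snd p)) (fst p) (Gx p).
Hypothesis HGy : forall p, box p0 p r0 -> is_derive (fun t => G (fst p, t)) (snd p) (Gy p).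
Hypothesis HKx : forall p, box p0 p r0 -> is_derive (fun t => K (t, snd p)) (fst p) (Kx p).
Hypothesis HKy : forall p, box p0 p r0 -> is_derive (fun t => K (fst p, t)) (snd p) (Ky p).
Hypothesis HG0 : G p0 = 0.
Hypothesis HK0 : K p0 = 0.
Hypothesis Hdet : Gy p0 * Kx p0 - Gx p0 * Ky p0 = 0.
Hypothesis HC : 0 < C.
Hypothesis HH : forall p, box p0 p r0 -> (G p <> 0 \/ K p <> 0) ->
  Rabs (quad (c1 p) (c2 p) (c3 p) (G p) (K p)) * dist2 p p0 <= C * sqrt (G p ^ 2 + K p ^ 2) ^ 3.

Section Near.
Variables (e rho : R).
Hypothesis He : 0 < e <= 1.
Hypothesis He_a : e <= Rabs (Gy p0) / 2.
Hypothesis Hrho : rho <= r0.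
Hypothesis Hnear : forall q, box p0 q rho ->
  Rabs (Gx q - Gx p0) <= e /\ Rabs (Gy q - Gy p0) <= e /\
  Rabs (Kx q - Kx p0) <= e /\ Rabs (Ky q - Ky p0) <= e.

(* Along [G = 0], the increment of [K] is governed by the perturbed Jacobian determinant,
   which is within [O(e)] of [det = 0]. *)
Lemma K_small_on_G_zero q : box p0 q rho -> G q = 0 ->
  Rabs (K q) <= e * (2 * (Rabs (Kx p0) + Rabs (Gy p0) + Rabs (Ky p0) + Rabs (Gx p0) + 2) / Rabs (Gy p0))
    * Rabs (fst q - x0).
Proof.
  destruct q as [x1 y1]; intros [Bx By] Gq; simpl in Bx, By |- *.
  assert (Bx' : Rabs (x1 - x0) < r0) by lra; assert (By' : Rabs (y1 - y0) < r0) by lra.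
  destruct (MVT_xy K Kx Ky p0 r0 HKx HKy x1 y1 Bx' By') as [ck [dk [Hck [Hdk Ek]]]].
  destruct (MVT_xy G Gx Gy p0 r0 HGx HGy x1 y1 Bx' By') as [cg [dg [Hcg [Hdg Eg]]]].
  simpl in Ek, Eg; rewrite HK0 in Ek; rewrite HG0, Gq in Eg.
  apply betw_le in Hck; apply betw_le in Hdk; apply betw_le in Hcg; apply betw_le in Hdg.
  simpl in Hck, Hdk, Hcg, Hdg.
  assert (Hbox : forall a b, Rabs (a - x0) <= Rabs (x1 - x0) -> Rabs (b - y0) <= Rabs (y1 - y0) ->
    box p0 (a, b) rho) by (intros a b Ha Hb; split; simpl; lra).
  assert (H0 : Rabs (x0 - x0) <= Rabs (x1 - x0)) by (rewrite Rminus_diag, Rabs_R0; apply Rabs_pos).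
  assert (H1 : Rabs (y1 - y0) <= Rabs (y1 - y0)) by lra.
  destruct (Hnear _ (Hbox _ _ Hck H1)) as [_ [_ [N1 _]]].
  destruct (Hnear _ (Hbox _ _ H0 Hdk)) as [_ [_ [_ N2]]].
  destruct (Hnear _ (Hbox _ _ Hcg H1)) as [N3 _].
  destruct (Hnear _ (Hbox _ _ H0 Hdg)) as [_ [N4 _]].
  set (Kx' := Kx (ck, y1)) in *; set (Ky' := Ky (x0, dk)) in *.
  set (Gx' := Gx (cg, y1)) in *; set (Gy' := Gy (x0, dg)) in *.
  assert (HD := approx_det e Kx' Gy' Ky' Gx' (Kx p0) (Gy p0) (Ky p0) (Gx p0)
    (conj (Rlt_le _ _ (proj1 He)) (proj2 He))
    (approx_of_abs _ _ _ N1) (approx_of_abs _ _ _ N4) (approx_of_abs _ _ _ N2) (approx_of_abs _ _ _ N3)).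
  unfold approx in HD.
  replace (Kx p0 * Gy p0 - Ky p0 * Gx p0) with 0 in HD by lra; rewrite Rminus_0_r in HD.
  assert (Eq : K (x1, y1) * Gy' = (Kx' * Gy' - Ky' * Gx') * (x1 - x0)).
  { assert (E1 : K (x1, y1) = Kx' * (x1 - x0) + Ky' * (y1 - y0)) by lra.
    assert (E2 : Gx' * (x1 - x0) + Gy' * (y1 - y0) = 0) by lra.
    rewrite E1; transitivity ((Kx' * Gy' - Ky' * Gx') * (x1 - x0) + Ky' * (Gx' * (x1 - x0) + Gy' * (y1 - y0)));
      [ring | rewrite E2; ring]. }
  destruct (near_keeps_sign (Gy p0) Gy' e N4 He_a) as [_ HGy'].
  set (L := Rabs (Kx p0) + Rabs (Gy p0) + Rabs (Ky p0) + Rabs (Gx p0) + 2) in *.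
  assert (A1 : Rabs (K (x1, y1)) * Rabs Gy' <= e * L * Rabs (x1 - x0)).
  { rewrite <- Rabs_mult, Eq, Rabs_mult; apply Rmult_le_compat_r; [apply Rabs_pos |].
    exact HD. }
  assert (A2 : Rabs (K (x1, y1)) * (Rabs (Gy p0) / 2) <= Rabs (K (x1, y1)) * Rabs Gy')
    by (apply Rmult_le_compat_l; [apply Rabs_pos | exact HGy']).
  apply (Rmult_le_reg_r (Rabs (Gy p0) / 2)); [lra |].
  replace (e * (2 * L / Rabs (Gy p0)) * Rabs (x1 - x0) * (Rabs (Gy p0) / 2))
    with (e * L * Rabs (x1 - x0)) by (field; lra).
  lra.
Qed.

Variables (lam L W : R).
Hypothesis Hsmall : forall q, box p0 q rho -> G q = 0 -> Rabs (K q) <= e * L * Rabs (fst q - x0).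
Hypothesis Hlam : e * (Rabs lam * L) <= 1/2.
Hypothesis Hquad : forall p A B, box p0 p rho -> Rabs (A - Gy p0) <= e -> Rabs (B - Ky p0) <= e ->
  1/2 <= quad (c1 p) (c2 p) (c3 p) (A * lam) (1 + B * lam).
Hypothesis HW1 : 1 <= W.
Hypothesis HW : forall A B, Rabs (A - Gy p0) <= e -> Rabs (B - Ky p0) <= e ->
  (A * lam) ^ 2 + (1 + B * lam) ^ 2 <= W.
Hypothesis HCW : 2 * C * (W * sqrt W) * (e * L) <= 1/2.

Lemma vertical_increment x1 y1 y' : box p0 (x1, y1) rho -> box p0 (x1, y') rho ->
  exists A B, Rabs (A - Gy p0) <= e /\ Rabs (B - Ky p0) <= e /\
    G (x1, y') = G (x1, y1) + A * (y' - y1) /\ K (x1, y') = K (x1, y1) + B * (y' - y1).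
Proof.
  intros [Bx By] [_ By']; simpl in Bx, By, By'.
  destruct (MVT_y G Gy p0 r0 HGy x1 y1 y') as [d3 [Hd3 Ed3]]; simpl; try lra.
  destruct (MVT_y K Ky p0 r0 HKy x1 y1 y') as [d4 [Hd4 Ed4]]; simpl; try lra.
  assert (B3 : box p0 (x1, d3) rho) by (split; simpl; [lra | eapply betw_close; eauto]).
  assert (B4 : box p0 (x1, d4) rho) by (split; simpl; [lra | eapply betw_close; eauto]).
  destruct (Hnear _ B3) as [_ [N3 _]]; destruct (Hnear _ B4) as [_ [_ [_ N4]]].
  exists (Gy (x1, d3)), (Ky (x1, d4)); split; [exact N3 | split; [exact N4 | split; lra]].
Qed.

Lemma K_zero_on_G_zero q : box p0 q (rho / 2) -> G q = 0 -> K q = 0.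
Proof.
  destruct q as [x1 y1]; intros [Bx By] Gq; simpl in Bx, By.
  set (phi := K (x1, y1)); destruct (Req_dec phi 0) as [| Hphi]; [assumption | exfalso].
  assert (Hrho0 : 0 < rho) by (assert (H := Rabs_pos (x1 - x0)); lra).
  assert (Bq : box p0 (x1, y1) rho) by (split; simpl; lra).
  assert (Hphi_s : Rabs phi <= e * L * Rabs (x1 - x0)) by exact (Hsmall _ Bq Gq).
  assert (Hlam_s : Rabs (lam * phi) <= Rabs (x1 - x0) / 2).
  { rewrite Rabs_mult.
    assert (Rabs lam * Rabs phi <= Rabs lam * (e * L * Rabs (x1 - x0)))
      by (apply Rmult_le_compat_l; [apply Rabs_pos | exact Hphi_s]).
    assert ((e * (Rabs lam * L)) * Rabs (x1 - x0) <= (1/2) * Rabs (x1 - x0))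
      by (apply Rmult_le_compat_r; [apply Rabs_pos | exact Hlam]).
    nra. }
  set (y' := y1 + lam * phi).
  assert (Bp : box p0 (x1, y') rho).
  { split; simpl; [lra |]; unfold y'; replace (y1 + lam * phi - y0) with ((y1 - y0) + lam * phi) by ring.
    eapply Rle_lt_trans; [apply Rabs_triang | lra]. }
  destruct (vertical_increment x1 y1 y' Bq Bp) as [A [B [N3 [N4 [EG EK]]]]].
  set (p := (x1, y')) in *; replace (y' - y1) with (lam * phi) in EG, EK by (unfold y'; ring).
  assert (EGp : G p = phi * (A * lam)) by (rewrite EG, Gq; ring).
  assert (EKp : K p = phi * (1 + B * lam)) by (rewrite EK; fold phi; ring).
  set (P := quad (c1 p) (c2 p) (c3 p) (A * lam) (1 + B * lam)).
  assert (HP : 1/2 <= P) by (apply Hquad; assumption).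
  assert (EN : quad (c1 p) (c2 p) (c3 p) (G p) (K p) = phi ^ 2 * P) by (rewrite EGp, EKp; apply quad_scale).
  assert (Hph2 : 0 < phi ^ 2) by (rewrite <- pow2_abs; apply pow_lt, Rabs_pos_lt; exact Hphi).
  assert (Hnz : G p <> 0 \/ K p <> 0).
  { destruct (Req_dec (G p) 0) as [Z1 | Z1]; [| left; exact Z1].
    destruct (Req_dec (K p) 0) as [Z2 | Z2]; [| right; exact Z2].
    exfalso; rewrite Z1, Z2 in EN; unfold quad in EN; nra. }
  assert (HHp := HH p (box_mono _ _ _ _ Bp Hrho) Hnz); rewrite EN in HHp.
  assert (S3 : sqrt (G p ^ 2 + K p ^ 2) ^ 3 <= Rabs phi ^ 3 * (W * sqrt W)).
  { apply sqrt_cube_le; [exact HW1 |]; rewrite EGp, EKp.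
    replace ((phi * (A * lam)) ^ 2 + (phi * (1 + B * lam)) ^ 2) with
      (phi ^ 2 * ((A * lam) ^ 2 + (1 + B * lam) ^ 2)) by ring.
    apply Rmult_le_compat_l; [lra | apply HW; assumption]. }
  assert (D1 : Rabs (x1 - x0) <= dist2 p p0) by exact (dist2_ge_x p p0).
  rewrite Rabs_mult, (Rabs_right (phi ^ 2)), (Rabs_right P) in HHp by lra.
  apply (curvature_growth_absurd (Rabs phi) (Rabs (x1 - x0)) P C (W * sqrt W) (e * L)); try lra.
  - apply Rabs_pos_lt; exact Hphi.
  - apply Rabs_pos.
  - apply Rmult_le_pos; [lra | apply sqrt_pos].
  - rewrite pow2_abs; eapply Rle_trans; [| eapply Rle_trans; [exact HHp |]].
    + apply Rmult_le_compat_l; [apply Rmult_le_pos; lra | exact D1].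
    + apply Rmult_le_compat_l; [lra | exact S3].
Qed.

End Near.

Hypothesis Hr0 : 0 < r0.
Hypothesis Hcont : forall f, In f (Gx :: Gy :: Kx :: Ky :: c1 :: c2 :: c3 :: nil) -> continuous f p0.
Hypothesis Ha : Gy p0 <> 0.
Hypothesis HD : quad (c1 p0) (c2 p0) (c3 p0) (Gy p0) (Ky p0) = 0.
Hypothesis HE : c2 p0 * Gy p0 + 2 * c3 p0 * Ky p0 <> 0.

Theorem G_zero_forces_K_zero : exists rv, 0 < rv /\ rv <= r0 /\
  forall q, box p0 q rv -> G q = 0 -> K q = 0.
Proof.
  set (a := Gy p0) in *; set (b := Ky p0) in *.
  set (lam := (1 - c3 p0) / (c2 p0 * a + 2 * c3 p0 * b)).
  assert (Hcentre := quad_shift_centre (c1 p0) (c2 p0) (c3 p0) a b HD HE); fold lam in Hcentre.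
  destruct quad_shift_ge_half as [Lq HLq].
  assert (Haa : 0 < Rabs a) by (apply Rabs_pos_lt; exact Ha).
  set (L := 2 * (Rabs (Kx p0) + Rabs a + Rabs b + Rabs (Gx p0) + 2) / Rabs a).
  assert (HL : 0 <= L).
  { unfold L, Rdiv; apply Rmult_le_pos; [| left; apply Rinv_0_lt_compat; exact Haa].
    assert (H1 := Rabs_pos (Kx p0)); assert (H2 := Rabs_pos b); assert (H3 := Rabs_pos (Gx p0)); lra. }
  set (W := ((Rabs a + 1) * Rabs lam) ^ 2 + (1 + (Rabs b + 1) * Rabs lam) ^ 2).
  assert (HW1 : 1 <= W).
  { assert (0 <= (Rabs b + 1) * Rabs lam)
      by (apply Rmult_le_pos; [assert (H := Rabs_pos b); lra | apply Rabs_pos]).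
    assert (0 <= ((Rabs a + 1) * Rabs lam) ^ 2) by apply pow2_ge_0.
    unfold W; nra. }
  destruct (exists_small_scale (/ Rabs a :: Lq lam (c1 p0) (c2 p0) (c3 p0) a b :: lam * L ::
    2 * C * (W * sqrt W) * L :: nil)) as [e [He Hscale]].
  assert (He_a : e <= Rabs a / 2).
  { assert (H := Hscale _ (or_introl eq_refl)); rewrite Rabs_inv, Rabs_Rabsolu in H.
    apply (Rmult_le_compat_r (Rabs a)) in H; [| lra].
    rewrite Rmult_assoc, Rinv_l in H by lra; lra. }
  assert (HeLq := Hscale _ (or_intror (or_introl eq_refl))).
  assert (Hlam : e * (Rabs lam * L) <= 1/2).
  { assert (H := Hscale _ (or_intror (or_intror (or_introl eq_refl)))).
    rewrite Rabs_mult, (Rabs_right L) in H by lra; exact H. }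
  assert (HCW : 2 * C * (W * sqrt W) * (e * L) <= 1/2).
  { assert (H := Hscale _ (or_intror (or_intror (or_intror (or_introl eq_refl))))).
    assert (0 <= W * sqrt W) by (apply Rmult_le_pos; [lra | apply sqrt_pos]).
    rewrite Rabs_right in H by (apply Rle_ge, Rmult_le_pos; [apply Rmult_le_pos |]; lra).
    lra. }
  destruct (continuous_box_all _ p0 e (proj1 He) Hcont) as [dc [Hdc Hc]].
  set (rho := Rmin r0 dc).
  assert (Hrho_r0 : rho <= r0) by apply Rmin_l.
  assert (Hnear : forall q f, box p0 q rho -> In f (Gx :: Gy :: Kx :: Ky :: c1 :: c2 :: c3 :: nil) ->
    Rabs (f q - f p0) <= e) by (intros q f Hq; apply Hc; eapply box_mono; [exact Hq | apply Rmin_r]).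
  assert (Hnear4 : forall q, box p0 q rho -> Rabs (Gx q - Gx p0) <= e /\ Rabs (Gy q - Gy p0) <= e /\
    Rabs (Kx q - Kx p0) <= e /\ Rabs (Ky q - Ky p0) <= e).
  { intros q Hq; repeat split; apply Hnear; simpl; tauto. }
  exists (rho / 2); split; [assert (0 < rho) by (apply Rmin_glb_lt; assumption); lra | split; [lra |]].
  apply (K_zero_on_G_zero e rho Hrho_r0 Hnear4 lam L W); try assumption.
  - exact (K_small_on_G_zero e rho He He_a Hrho_r0 Hnear4).
  - intros p A B Hp HA HB.
    apply (HLq e lam _ _ _ _ _ (c1 p0) (c2 p0) (c3 p0) a b (conj (Rlt_le _ _ (proj1 He)) (proj2 He)));
      try assumption; apply Hnear; simpl; tauto.
  - intros A B HA HB; apply (shift_norm_bound A B a b lam e HA HB (proj2 He)).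
Qed.

End Vanishing.

(** * Local arcs *)

Definition local_arc (Z : R * R -> Prop) (p0 : R * R) : Prop :=
  exists V : R * R -> Prop, open V /\ V p0 /\
    exists (a b t0 : R) (g : R -> R * R),
      regular_C1_arc a b g /\ a < t0 < b /\ g t0 = p0 /\
      forall q, (V q /\ Z q) <-> (exists t, a < t < b /\ g t = q).

Lemma Derive_id_continuous t : continuous (Derive (fun s : R => s)) t.
Proof.
  apply (continuous_ext (fun _ => 1)); [| apply continuous_const].
  intros s; symmetry; apply is_derive_unique; exact (is_derive_id s).
Qed.

Lemma local_arc_of_graph (Z : R * R -> Prop) x0 y0 del rho (h : R -> R) :
  0 < del -> 0 < rho -> h x0 = y0 ->
  (forall t, Rabs (t - x0) < del -> ex_derive h t /\ continuous (Derive h) t) ->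
  (forall q, (Rabs (fst q - x0) < del /\ Rabs (snd q - y0) < rho /\ Z q) <->
             (Rabs (fst q - x0) < del /\ snd q = h (fst q))) ->
  local_arc Z (x0, y0).
Proof.
  intros Hdel Hrho Hh0 Hder Hgraph.
  exists (fun q => Rabs (fst q - x0) < del /\ Rabs (snd q - y0) < rho); split; [apply open_rectangle |].
  split; [simpl; rewrite !Rminus_diag, Rabs_R0; lra |].
  exists (x0 - del), (x0 + del), x0, (fun t => (t, h t)).
  assert (It : forall t, x0 - del < t < x0 + del <-> Rabs (t - x0) < del).
  { intros t; split; intros H; [apply Rabs_def1; lra | apply Rabs_def2 in H; lra]. }
  split; [split; [lra | split] |].
  - intros t Ht; apply It in Ht; destruct (Hder t Ht) as [E1 E2]; simpl.
    rewrite (is_derive_unique (fun s : R => s) t 1 (is_derive_id t)).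
    split; [exists 1; exact (is_derive_id t) |]; split; [exact E1 |].
    split; [apply Derive_id_continuous |]; split; [exact E2 | left; lra].
  - intros s t _ _ E; injection E; auto.
  - split; [lra |]; split; [rewrite Hh0; reflexivity |].
    intros [qx qy]; simpl; split.
    + intros [[H1 H2] HZ]; destruct (proj1 (Hgraph (qx, qy)) (conj H1 (conj H2 HZ))) as [_ E].
      exists qx; split; [apply It; exact H1 | simpl in E; rewrite E; reflexivity].
    + intros [t [Ht E]]; injection E as <- <-; apply It in Ht.
      destruct (proj2 (Hgraph (t, h t)) (conj Ht eq_refl)) as [_ [H2 HZ]].
      split; [split; assumption | exact HZ].
Qed.

Lemma local_arc_swap (Z : R * R -> Prop) p0 :
  local_arc (fun q => Z (snd q, fst q)) (snd p0, fst p0) -> local_arc Z p0.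
Proof.
  intros [V [HV [HV0 [a [b [t0 [g [[Hab [Hreg Hinj]] [Ht0 [Hg0 HZ]]]]]]]]]].
  exists (fun q => V (snd q, fst q)); split.
  { intros q Hq; destruct (HV _ Hq) as [eps He]; exists eps.
    intros q' [H1 H2]; apply He; split; assumption. }
  split; [destruct p0; exact HV0 |].
  exists a, b, t0, (fun t => (snd (g t), fst (g t))); split; [split; [exact Hab | split] |].
  - intros t Ht; destruct (Hreg t Ht) as [E1 [E2 [E3 [E4 E5]]]]; simpl; tauto.
  - intros s t Hs Ht E; injection E as E1 E2; apply Hinj; [exact Hs | exact Ht |].
    apply injective_projections; assumption.
  - split; [exact Ht0 |]; split; [rewrite Hg0; destruct p0; reflexivity |].
    intros [qx qy]; split.
    + intros H; destruct (proj1 (HZ (qy, qx)) H) as [t [Ht E]].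
      exists t; split; [exact Ht | rewrite E; reflexivity].
    + intros [t [Ht E]]; injection E as E1 E2; apply (HZ (qy, qx)).
      exists t; split; [exact Ht | apply injective_projections; simpl; assumption].
Qed.

Lemma local_arc_not_isolated (Z : R * R -> Prop) p0 : local_arc Z p0 ->
  forall eps, 0 < eps -> exists q, Z q /\ q <> p0 /\ dist2 q p0 < eps.
Proof.
  intros [V [HV [HV0 [a [b [t0 [g [[Hab [Hreg Hinj]] [Ht0 [Hg0 HZ]]]]]]]]]] eps Heps.
  destruct (Hreg t0 Ht0) as [Ex [Ey _]].
  destruct (continuous_R_elim _ _ (ex_derive_continuous _ _ Ex) (eps / 2)) as [e1 [He1 C1]]; [lra |].
  destruct (continuous_R_elim _ _ (ex_derive_continuous _ _ Ey) (eps / 2)) as [e2 [He2 C2]]; [lra |].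
  set (m := Rmin (Rmin e1 e2) (b - t0)).
  assert (Hm : 0 < m) by (apply Rmin_glb_lt; [apply Rmin_glb_lt |]; lra).
  assert (Hm1 : m <= e1) by (eapply Rle_trans; [apply Rmin_l | apply Rmin_l]).
  assert (Hm2 : m <= e2) by (eapply Rle_trans; [apply Rmin_l | apply Rmin_r]).
  assert (Hm3 : m <= b - t0) by apply Rmin_r.
  set (t := t0 + m / 2).
  assert (Ht : a < t < b) by (unfold t; lra).
  assert (Htt : Rabs (t - t0) < m).
  { unfold t; replace (t0 + m / 2 - t0) with (m / 2) by ring; rewrite Rabs_right; lra. }
  exists (g t); split; [| split].
  - apply (proj2 (HZ (g t))); exists t; split; [exact Ht | reflexivity].
  - intro E; rewrite <- Hg0 in E; apply Hinj in E; [unfold t in E; lra | exact Ht | exact Ht0].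
  - specialize (C1 t ltac:(lra)); specialize (C2 t ltac:(lra)).
    eapply Rle_lt_trans; [apply dist2_le | rewrite <- Hg0; lra].
Qed.

Section Graph.
Variables (G K Gx Gy Kx Ky c1 c2 c3 : R * R -> R) (x0 y0 r0 C : R).
Local Notation p0 := (x0, y0).
Hypothesis Hr0 : 0 < r0.
Hypothesis HGx : forall p, box p0 p r0 -> is_derive (fun t => G (t, snd p)) (fst p) (Gx p).
Hypothesis HGy : forall p, box p0 p r0 -> is_derive (fun t => G (fst p, t)) (snd p) (Gy p).
Hypothesis HKx : forall p, box p0 p r0 -> is_derive (fun t => K (t, snd p)) (fst p) (Kx p).
Hypothesis HKy : forall p, box p0 p r0 -> is_derive (fun t => K (fst p, t)) (snd p) (Ky p).
Hypothesis CGx : forall p, box p0 p r0 -> continuous Gx p.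
Hypothesis CGy : forall p, box p0 p r0 -> continuous Gy p.
Hypothesis Hcont : forall f, In f (Kx :: Ky :: c1 :: c2 :: c3 :: nil) -> continuous f p0.
Hypothesis HG0 : G p0 = 0.
Hypothesis HK0 : K p0 = 0.
Hypothesis Ha : Gy p0 <> 0.
Hypothesis Hdet : Gy p0 * Kx p0 - Gx p0 * Ky p0 = 0.
Hypothesis HD : quad (c1 p0) (c2 p0) (c3 p0) (Gy p0) (Ky p0) = 0.
Hypothesis HE : c2 p0 * Gy p0 + 2 * c3 p0 * Ky p0 <> 0.
Hypothesis HC : 0 < C.
Hypothesis HH : forall p, box p0 p r0 -> (G p <> 0 \/ K p <> 0) ->
  Rabs (quad (c1 p) (c2 p) (c3 p) (G p) (K p)) * dist2 p p0 <= C * sqrt (G p ^ 2 + K p ^ 2) ^ 3.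

Theorem common_zeros_graph : exists del rho (h : R -> R),
  0 < del <= rho /\ rho <= r0 /\ h x0 = y0 /\
  (forall t, Rabs (t - x0) < del -> ex_derive h t /\ continuous (Derive h) t) /\
  (forall q, (Rabs (fst q - x0) < del /\ Rabs (snd q - y0) < rho /\ G q = 0 /\ K q = 0) <->
             (Rabs (fst q - x0) < del /\ snd q = h (fst q))).
Proof.
  destruct (G_zero_forces_K_zero G K Gx Gy Kx Ky c1 c2 c3 x0 y0 r0 C HGx HGy HKx HKy HG0 HK0 Hdet HC HH Hr0)
    as [rv [Hrv [Hrv_r0 Hvan]]]; try assumption.
  { intros f Hf; destruct Hf as [<- | [<- | Hf]]; [apply CGx | apply CGy | apply Hcont; exact Hf];
      apply box_center; exact Hr0. }
  destruct (implicit_function G Gx Gy x0 y0 r0 HGx HGy CGx CGy HG0 Hr0 rv Ha Hrv)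
    as [del [rho [h [Hdel [Hdr [Hrr [_ [Hspec [Huniq Hder]]]]]]]]].
  assert (Hh0 : h x0 = y0).
  { symmetry; apply Huniq; [| | exact HG0]; rewrite Rminus_diag, Rabs_R0; lra. }
  exists del, rho, h; split; [lra |]; split; [lra |]; split; [exact Hh0 |]; split.
  - intros t Ht; destruct (Hder t Ht) as [Hd Hc]; split; [eexists; exact Hd | exact Hc].
  - intros [x y]; simpl; split.
    + intros [Hx [Hy [Gq _]]]; split; [exact Hx | apply Huniq; assumption].
    + intros [Hx ->]; destruct (Hspec x Hx) as [Hy Gq].
      split; [exact Hx |]; split; [exact Hy |]; split; [exact Gq |].
      apply Hvan; [split; simpl; lra | exact Gq].
Qed.

Variable Z : R * R -> Prop.
Hypothesis HZ : forall q, box p0 q r0 -> (Z q <-> G q = 0 /\ K q = 0).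

Corollary local_arc_of_common_zeros : local_arc Z p0.
Proof.
  destruct common_zeros_graph as [del [rho [h [[Hdel Hdr] [Hrr [Hh0 [Hder Hgraph]]]]]]].
  apply (local_arc_of_graph Z x0 y0 del rho h); try assumption; [lra |].
  intros q; rewrite <- Hgraph.
  assert (Hq : Rabs (fst q - x0) < del -> Rabs (snd q - y0) < rho -> box p0 q r0) by (split; simpl; lra).
  split; intros [Hx [Hy HZq]]; (split; [exact Hx | split; [exact Hy |]]); apply (HZ q (Hq Hx Hy)); exact HZq.
Qed.

End Graph.

(** * The field (u_x - y, u_y + x) *)

Lemma is_derive_eq (f : R -> R) x d d' : is_derive f x d -> d = d' -> is_derive f x d'.
Proof. intros H <-; exact H. Qed.

Lemma is_derive_normalized (f g : R -> R) x df dg :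
  is_derive f x df -> is_derive g x dg -> 0 < f x ^ 2 + g x ^ 2 ->
  is_derive (fun t => f t / sqrt (f t ^ 2 + g t ^ 2)) x
    ((df * g x ^ 2 - f x * g x * dg) / sqrt (f x ^ 2 + g x ^ 2) ^ 3).
Proof.
  intros Hf Hg Hp.
  assert (Hs : is_derive (fun t => f t ^ 2 + g t ^ 2) x (2 * df * f x + 2 * dg * g x)).
  { eapply is_derive_eq; [apply (is_derive_plus (fun t => f t ^ 2) (fun t => g t ^ 2));
      apply is_derive_pow; eassumption |]; unfold plus; simpl; ring. }
  assert (Hq := is_derive_sqrt _ _ _ Hs Hp).
  set (s := sqrt (f x ^ 2 + g x ^ 2)) in *.
  assert (Hs0 : 0 < s) by (apply sqrt_lt_R0; exact Hp).
  assert (Hss : s * s = f x ^ 2 + g x ^ 2) by (apply sqrt_sqrt; lra).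
  eapply is_derive_eq; [apply (is_derive_div f (fun t => sqrt (f t ^ 2 + g t ^ 2)) x df _ Hf Hq);
    fold s; lra |].
  fold s; replace (df * g x ^ 2 - f x * g x * dg) with (df * (s * s) - f x * (f x * df + g x * dg))
    by (rewrite Hss; ring).
  (* The equation lives in [R_NormedModule]; [field] only recognises it over [R]. *)
  match goal with |- ?l = ?r => change (@eq R l r) end; field; lra.
Qed.

(* [Pux Puy; Qux Quy] is the Jacobian matrix of [(Pu, Qu)], which is [U] once [u_xy = u_yx]. *)
Definition Pu (u : R * R -> R) (p : R * R) : R := dx u p - snd p.
Definition Qu (u : R * R -> R) (p : R * R) : R := dy u p + fst p.
Definition Pux (u : R * R -> R) (p : R * R) : R := dx (dx u) p.
Definition Puy (u : R * R -> R) (p : R * R) : R := dy (dx u) p - 1.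
Definition Qux (u : R * R -> R) (p : R * R) : R := dx (dy u) p + 1.
Definition Quy (u : R * R -> R) (p : R * R) : R := dy (dy u) p.

Definition curvature_numerator (u : R * R -> R) (p : R * R) : R :=
  quad (Quy u p) (- (Puy u p + Qux u p)) (Pux u p) (Pu u p) (Qu u p).

Lemma Pu_Qu_derivatives O u p : C2_on O u -> O p ->
  is_derive (fun t => Pu u (t, snd p)) (fst p) (Pux u p) /\
  is_derive (fun t => Pu u (fst p, t)) (snd p) (Puy u p) /\
  is_derive (fun t => Qu u (t, snd p)) (fst p) (Qux u p) /\
  is_derive (fun t => Qu u (fst p, t)) (snd p) (Quy u p).
Proof.
  intros [_ [H1 H2]] Op.
  destruct (H1 p Op) as [_ [ex1 [ey1 _]]]; destruct (H2 p Op) as [_ [ex2 [ey2 _]]].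
  apply Derive_correct in ex1, ey1, ex2, ey2.
  split; [| split; [| split]]; eapply is_derive_eq.
  - apply (is_derive_minus _ _ _ _ _ ex1 (is_derive_const (snd p) (fst p))).
  - unfold Pux, dx, minus, plus, opp, zero; simpl; ring.
  - apply (is_derive_minus _ _ _ _ _ ey1 (is_derive_id (snd p))).
  - unfold Puy, dy, minus, plus, opp, one; simpl; ring.
  - apply (is_derive_plus _ _ _ _ _ ex2 (is_derive_id (fst p))).
  - unfold Qux, dx, plus, one; simpl; ring.
  - apply (is_derive_plus _ _ _ _ _ ey2 (is_derive_const (fst p) (snd p))).
  - unfold Quy, dy, plus, zero; simpl; ring.
Qed.

Lemma Pu_Qu_derivatives_continuous O u p : C2_on O u -> O p ->
  continuous (Pux u) p /\ continuous (Puy u) p /\ continuous (Qux u) p /\ continuous (Quy u) p.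
Proof.
  intros [_ [H1 H2]] Op.
  destruct (H1 p Op) as [_ [_ [_ [c1 c2]]]]; destruct (H2 p Op) as [_ [_ [_ [c3 c4]]]].
  split; [exact c1 | split; [| split; [| exact c4]]].
  - apply (continuous_minus (dy (dx u)) (fun _ => 1)); [exact c2 | apply continuous_const].
  - apply (continuous_plus (dx (dy u)) (fun _ => 1)); [exact c3 | apply continuous_const].
Qed.

Lemma mixed_partials_eq O u x0 y0 : open O -> O (x0, y0) -> C2_on O u ->
  dx (dy u) (x0, y0) = dy (dx u) (x0, y0).
Proof.
  intros HO H0 [C0 [C1 C2]].
  destruct (HO _ H0) as [eps Heps].
  destruct (C1 _ H0) as [_ [_ [_ [_ Ca]]]]; destruct (C2 _ H0) as [_ [_ [_ [Cb _]]]].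
  apply (Schwarz (fun a b => u (a, b)) x0 y0).
  - exists eps; intros a b Ha Hb.
    assert (Oab : O (a, b)) by (apply Heps; split; assumption).
    destruct (C0 _ Oab) as [_ [e1 [e2 _]]]; destruct (C1 _ Oab) as [_ [_ [e4 _]]].
    destruct (C2 _ Oab) as [_ [e3 _]].
    split; [exact e1 | split; [exact e2 | split; [exact e3 | exact e4]]].
  - apply continuity_2d_pt_filterlim; exact Cb.
  - apply continuity_2d_pt_filterlim; exact Ca.
Qed.

Lemma sum_sq_pos a b : a <> 0 \/ b <> 0 -> 0 < a ^ 2 + b ^ 2.
Proof.
  intros [Z | Z]; [assert (0 < a ^ 2) | assert (0 < b ^ 2)];
    try (rewrite <- pow2_abs; apply pow_lt, Rabs_pos_lt; exact Z);
    assert (H1 := pow2_ge_0 a); assert (H2 := pow2_ge_0 b); lra.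
Qed.

Lemma Hcurv_formula O u p : C2_on O u -> O p -> (Pu u p <> 0 \/ Qu u p <> 0) ->
  Hcurv u p = curvature_numerator u p / sqrt (Pu u p ^ 2 + Qu u p ^ 2) ^ 3.
Proof.
  intros HC Op Hnz; destruct p as [x y].
  destruct (Pu_Qu_derivatives O u (x, y) HC Op) as [D1 [D2 [D3 D4]]]; simpl in D1, D2, D3, D4.
  assert (Hpos := sum_sq_pos _ _ Hnz).
  assert (E1 := is_derive_normalized (fun t => Pu u (t, y)) (fun t => Qu u (t, y)) x _ _ D1 D3 Hpos).
  assert (E2 := is_derive_normalized (fun t => Qu u (x, t)) (fun t => Pu u (x, t)) y _ _ D4 D2
    ltac:(rewrite Rplus_comm; exact Hpos)).
  apply (is_derive_ext _ (fun t => Qu u (x, t) / sqrt (Pu u (x, t) ^ 2 + Qu u (x, t) ^ 2))) in E2;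
    [| intros t; simpl; rewrite Rplus_comm; reflexivity].
  unfold Hcurv; rewrite (is_derive_unique _ _ _ E1 : dx (N1 u) (x, y) = _),
    (is_derive_unique _ _ _ E2 : dy (N2 u) (x, y) = _).
  rewrite (Rplus_comm (Qu u (x, y) ^ 2)).
  assert (0 < sqrt (Pu u (x, y) ^ 2 + Qu u (x, y) ^ 2)) by (apply sqrt_lt_R0; exact Hpos).
  unfold curvature_numerator, quad; field; lra.
Qed.

Lemma curvature_numerator_bound O u p0 C d : C2_on O u -> Sset O u p0 ->
  (forall p, O p -> dist2 p p0 < d -> ~ Sset O u p -> Rabs (Hcurv u p) <= C / dist2 p p0) ->
  forall p, O p -> dist2 p p0 < d -> (Pu u p <> 0 \/ Qu u p <> 0) ->
    Rabs (curvature_numerator u p) * dist2 p p0 <= C * sqrt (Pu u p ^ 2 + Qu u p ^ 2) ^ 3.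
Proof.
  intros HC HS0 HH p Op Hd Hnz.
  assert (NS : ~ Sset O u p) by (intros [_ [E1 E2]]; destruct Hnz as [Z | Z]; apply Z; assumption).
  assert (Hdp : 0 < dist2 p p0).
  { assert (0 <= dist2 p p0) by apply sqrt_pos.
    destruct (Req_dec (dist2 p p0) 0) as [Z | Z]; [apply dist2_eq0 in Z; subst p; contradiction | lra]. }
  specialize (HH p Op Hd NS); rewrite (Hcurv_formula O u p HC Op Hnz) in HH.
  set (S := sqrt (Pu u p ^ 2 + Qu u p ^ 2)) in *.
  assert (HS : 0 < S) by (apply sqrt_lt_R0, sum_sq_pos; exact Hnz).
  assert (HS3 : 0 < S ^ 3) by (apply pow_lt; exact HS).
  unfold Rdiv in HH; rewrite Rabs_mult, Rabs_inv, (Rabs_right (S ^ 3)) in HH by lra.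
  apply (Rmult_le_compat_r (S ^ 3 * dist2 p p0)) in HH; [| apply Rmult_le_pos; lra].
  replace (Rabs (curvature_numerator u p) * / S ^ 3 * (S ^ 3 * dist2 p p0))
    with (Rabs (curvature_numerator u p) * dist2 p p0) in HH
    by (field; lra).
  replace (C * / dist2 p p0 * (S ^ 3 * dist2 p p0)) with (C * S ^ 3) in HH by (field; lra).
  exact HH.
Qed.

Section Singular_point.
Variables (O : R * R -> Prop) (u : R * R -> R) (x0 y0 r0 C : R).
Local Notation p0 := (x0, y0).
Hypothesis HC2 : C2_on O u.
Hypothesis Hr0 : 0 < r0.
Hypothesis HO : forall q, box p0 q r0 -> O q.
Hypothesis HS0 : Sset O u p0.
Hypothesis Hsym : dx (dy u) p0 = dy (dx u) p0.
Hypothesis HC : 0 < C.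
Hypothesis HB : forall p, box p0 p r0 -> (Pu u p <> 0 \/ Qu u p <> 0) ->
  Rabs (curvature_numerator u p) * dist2 p p0 <= C * sqrt (Pu u p ^ 2 + Qu u p ^ 2) ^ 3.

Lemma Sset_box q : box p0 q r0 -> (Sset O u q <-> Pu u q = 0 /\ Qu u q = 0).
Proof.
  intros Hq; split; [intros [_ [E1 E2]]; split; assumption |].
  intros [E1 E2]; split; [apply HO; exact Hq | split; assumption].
Qed.

Lemma Pu_p0 : Pu u p0 = 0.
Proof. destruct HS0 as [_ [E _]]; exact E. Qed.

Lemma Qu_p0 : Qu u p0 = 0.
Proof. destruct HS0 as [_ [_ E]]; exact E. Qed.

Lemma Qux_p0 : Qux u p0 = Puy u p0 + 2.
Proof. unfold Qux, Puy; rewrite Hsym; ring. Qed.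

Lemma detU_p0 : detU u p0 = Pux u p0 * Quy u p0 - Puy u p0 * Qux u p0.
Proof. unfold detU, Pux, Quy, Puy, Qux; rewrite Hsym; ring. Qed.

Lemma Pu_Qu_derivatives_box q : box p0 q r0 ->
  is_derive (fun t => Pu u (t, snd q)) (fst q) (Pux u q) /\
  is_derive (fun t => Pu u (fst q, t)) (snd q) (Puy u q) /\
  is_derive (fun t => Qu u (t, snd q)) (fst q) (Qux u q) /\
  is_derive (fun t => Qu u (fst q, t)) (snd q) (Quy u q).
Proof. intros Hq; exact (Pu_Qu_derivatives O u q HC2 (HO q Hq)). Qed.

Lemma Pu_Qu_continuous_box q : box p0 q r0 ->
  continuous (Pux u) q /\ continuous (Puy u) q /\ continuous (Qux u) q /\ continuous (Quy u) q.
Proof. intros Hq; exact (Pu_Qu_derivatives_continuous O u q HC2 (HO q Hq)). Qed.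

Lemma detU_eq0_of_not_isolated :
  (forall eps, 0 < eps -> exists q, Sset O u q /\ q <> p0 /\ dist2 q p0 < eps) -> detU u p0 = 0.
Proof.
  intros Hacc; destruct (Req_dec (detU u p0) 0) as [| Hn]; [assumption | exfalso].
  assert (Hc := Pu_Qu_continuous_box p0 (box_center p0 r0 Hr0)).
  destruct (fiber_isolated_of_det_neq0 (Pu u) (Qu u) (Pux u) (Puy u) (Qux u) (Quy u) p0 r0 Hr0
    (fun p Hp => proj1 (Pu_Qu_derivatives_box p Hp))
    (fun p Hp => proj1 (proj2 (Pu_Qu_derivatives_box p Hp)))
    (fun p Hp => proj1 (proj2 (proj2 (Pu_Qu_derivatives_box p Hp))))
    (fun p Hp => proj2 (proj2 (proj2 (Pu_Qu_derivatives_box p Hp))))) as [r [Hr Hiso]]; try tauto.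
  { rewrite <- detU_p0; exact Hn. }
  destruct (Hacc (Rmin r r0)) as [q [Sq [Hne Hdq]]]; [apply Rmin_glb_lt; assumption |].
  apply box_of_dist2 in Hdq.
  destruct (proj1 (Sset_box q (box_mono _ _ _ _ Hdq (Rmin_r _ _))) Sq) as [E1 E2].
  apply Hne, Hiso; [eapply box_mono; [exact Hdq | apply Rmin_l] | rewrite Pu_p0 | rewrite Qu_p0]; assumption.
Qed.

Lemma continuous_c2_p0 : continuous (fun q => - (Puy u q + Qux u q)) p0.
Proof.
  destruct (Pu_Qu_continuous_box p0 (box_center p0 r0 Hr0)) as [_ [C2 [C3 _]]].
  apply (continuous_opp (fun q => Puy u q + Qux u q)), (continuous_plus (Puy u) (Qux u)); assumption.
Qed.

Lemma local_arc_of_Puy_neq0 : detU u p0 = 0 -> Puy u p0 <> 0 -> local_arc (Sset O u) p0.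
Proof.
  intros Hdet Hpy; rewrite detU_p0, Qux_p0 in Hdet.
  assert (Hc := Pu_Qu_continuous_box p0 (box_center p0 r0 Hr0)).
  apply (local_arc_of_common_zeros (Pu u) (Qu u) (Pux u) (Puy u) (Qux u) (Quy u)
    (Quy u) (fun q => - (Puy u q + Qux u q)) (Pux u) x0 y0 r0 C Hr0);
    try (intros p Hp; destruct (Pu_Qu_derivatives_box p Hp); tauto);
    try (intros p Hp; destruct (Pu_Qu_continuous_box p Hp); tauto).
  - intros f Hf; simpl in Hf.
    destruct Hf as [<- | [<- | [<- | [<- | [<- | []]]]]]; try apply continuous_c2_p0; tauto.
  - exact Pu_p0.
  - exact Qu_p0.
  - exact Hpy.
  - rewrite Qux_p0; lra.
  - unfold quad; rewrite Qux_p0.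
    replace (Quy u p0 * (Puy u p0 * Puy u p0) + - (Puy u p0 + (Puy u p0 + 2)) * (Puy u p0 * Quy u p0) +
      Pux u p0 * (Quy u p0 * Quy u p0))
      with (Quy u p0 * (Pux u p0 * Quy u p0 - Puy u p0 * (Puy u p0 + 2))) by ring.
    rewrite Hdet; ring.
  - rewrite Qux_p0; intro Z; apply Hpy; lra.
  - exact HC.
  - exact HB.
  - exact Sset_box.
Qed.

Lemma local_arc_of_Quy_neq0 : detU u p0 = 0 -> Quy u p0 <> 0 -> local_arc (Sset O u) p0.
Proof.
  intros Hdet Hqy; rewrite detU_p0 in Hdet.
  assert (Hc := Pu_Qu_continuous_box p0 (box_center p0 r0 Hr0)).
  apply (local_arc_of_common_zeros (Qu u) (Pu u) (Qux u) (Quy u) (Pux u) (Puy u)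
    (Pux u) (fun q => - (Puy u q + Qux u q)) (Quy u) x0 y0 r0 C Hr0);
    try (intros p Hp; destruct (Pu_Qu_derivatives_box p Hp); tauto);
    try (intros p Hp; destruct (Pu_Qu_continuous_box p Hp); tauto).
  - intros f Hf; simpl in Hf.
    destruct Hf as [<- | [<- | [<- | [<- | [<- | []]]]]]; try apply continuous_c2_p0; tauto.
  - exact Qu_p0.
  - exact Pu_p0.
  - exact Hqy.
  - lra.
  - unfold quad.
    replace (Pux u p0 * (Quy u p0 * Quy u p0) + - (Puy u p0 + Qux u p0) * (Quy u p0 * Puy u p0) +
      Quy u p0 * (Puy u p0 * Puy u p0)) with (Quy u p0 * (Pux u p0 * Quy u p0 - Puy u p0 * Qux u p0)) by ring.
    rewrite Hdet; ring.
  - rewrite Qux_p0; intro Z; apply Hqy; lra.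
  - exact HC.
  - intros p Hp Hnz; rewrite (Rplus_comm (Qu u p ^ 2)).
    replace (quad (Pux u p) (- (Puy u p + Qux u p)) (Quy u p) (Qu u p) (Pu u p)) with (curvature_numerator u p)
      by (unfold curvature_numerator, quad; ring).
    apply HB; [exact Hp | tauto].
  - intros q Hq; rewrite (Sset_box q Hq); tauto.
Qed.

(* When [Puy] and [Quy] both vanish, [G = Qu] has nonzero [x]-derivative [Qux = 2];
   exchanging the coordinates brings us back to the previous situation. *)
Lemma local_arc_of_Puy_Quy_eq0 : Puy u p0 = 0 -> Quy u p0 = 0 -> local_arc (Sset O u) p0.
Proof.
  intros Hpy Hqy; apply local_arc_swap; simpl.
  set (sw := fun (f : R * R -> R) (q : R * R) => f (snd q, fst q)).
  assert (Hsw : forall q, box (y0, x0) q r0 -> box p0 (snd q, fst q) r0)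
    by (intros q Hq; exact (box_swap _ _ _ Hq)).
  assert (Hc := Pu_Qu_continuous_box p0 (box_center p0 r0 Hr0)).
  apply (local_arc_of_common_zeros (sw (Qu u)) (sw (Pu u)) (sw (Quy u)) (sw (Qux u)) (sw (Puy u)) (sw (Pux u))
    (sw (Pux u)) (sw (fun q => - (Puy u q + Qux u q))) (sw (Quy u)) y0 x0 r0 C Hr0);
    try (intros p Hp; destruct (Pu_Qu_derivatives_box _ (Hsw p Hp)); tauto);
    try (intros p Hp; destruct (Pu_Qu_continuous_box _ (Hsw p Hp)); apply continuous_swap; tauto).
  - intros f Hf; simpl in Hf.
    destruct Hf as [<- | [<- | [<- | [<- | [<- | []]]]]]; unfold sw;
      [apply (continuous_swap (Puy u)) | apply (continuous_swap (Pux u)) | apply (continuous_swap (Pux u)) |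
       apply (continuous_swap (fun q => - (Puy u q + Qux u q))) | apply (continuous_swap (Quy u))];
      simpl; try apply continuous_c2_p0; tauto.
  - exact Qu_p0.
  - exact Pu_p0.
  - unfold sw; simpl; rewrite Qux_p0, Hpy; lra.
  - unfold sw; simpl; rewrite Hpy, Hqy; ring.
  - unfold sw, quad; simpl; rewrite Hpy, Hqy; ring.
  - unfold sw; simpl; rewrite Qux_p0, Hpy, Hqy; lra.
  - exact HC.
  - intros [s t] Hp Hnz; unfold sw; simpl in Hnz |- *.
    replace (dist2 (s, t) (y0, x0)) with (dist2 (t, s) p0) by (unfold dist2; simpl; rewrite Rplus_comm; reflexivity).
    rewrite (Rplus_comm (Qu u (t, s) ^ 2)).
    replace (quad (Pux u (t, s)) (- (Puy u (t, s) + Qux u (t, s))) (Quy u (t, s)) (Qu u (t, s)) (Pu u (t, s)))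
      with (curvature_numerator u (t, s)) by (unfold curvature_numerator, quad; ring).
    apply HB; [exact (Hsw _ Hp) | tauto].
  - intros q Hq; unfold sw; rewrite (Sset_box _ (Hsw q Hq)); tauto.
Qed.

Lemma local_arc_of_detU_eq0 : detU u p0 = 0 -> local_arc (Sset O u) p0.
Proof.
  intros Hdet.
  destruct (Req_dec (Puy u p0) 0) as [Hpy | Hpy]; [| exact (local_arc_of_Puy_neq0 Hdet Hpy)].
  destruct (Req_dec (Quy u p0) 0) as [Hqy | Hqy]; [| exact (local_arc_of_Quy_neq0 Hdet Hqy)].
  exact (local_arc_of_Puy_Quy_eq0 Hpy Hqy).
Qed.

End Singular_point.

Lemma box_inside_open (O : R * R -> Prop) p0 del : open O -> O p0 -> 0 < del ->
  exists r0, 0 < r0 /\ forall q, box p0 q r0 -> O q /\ dist2 q p0 < del.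
Proof.
  intros HO Op0 Hdel; destruct (HO _ Op0) as [eps Heps].
  exists (Rmin eps (del / 2)); split; [apply Rmin_glb_lt; [apply cond_pos | lra] |].
  intros q Hq; split.
  - apply Heps; eapply box_mono; [exact Hq | apply Rmin_l].
  - destruct (box_mono _ _ _ _ Hq (Rmin_r eps (del / 2))) as [H1 H2].
    eapply Rle_lt_trans; [apply dist2_le | lra].
Qed.

Theorem theorem3p3 (O : R * R -> Prop) (u : R * R -> R) (p0 : R * R) :
  domain2 O -> C2_on O u -> Sset O u p0 ->
  (exists C : R, 0 < C /\ exists delta : R, 0 < delta /\
     forall p, O p -> dist2 p p0 < delta -> ~ Sset O u p ->
       Rabs (Hcurv u p) <= C / dist2 p p0) ->
  ((forall eps : R, 0 < eps -> exists q, Sset O u q /\ q <> p0 /\ dist2 q p0 < eps)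
   <-> detU u p0 = 0)
  /\
  (detU u p0 = 0 <->
   exists V : R * R -> Prop, open V /\ V p0 /\
     exists (a b t0 : R) (g : R -> R * R),
       regular_C1_arc a b g /\ a < t0 < b /\ g t0 = p0 /\
       forall q, (V q /\ Sset O u q) <-> (exists t, a < t < b /\ g t = q)).
Proof.
  intros [HO _] HC2 HS0 [C [HC [del [Hdel Hcurv]]]].
  destruct p0 as [x0 y0].
  assert (Op0 : O (x0, y0)) by apply HS0.
  destruct (box_inside_open O (x0, y0) del HO Op0 Hdel) as [r0 [Hr0 Hbox]].
  assert (HOr0 : forall q, box (x0, y0) q r0 -> O q) by (intros q Hq; apply Hbox; exact Hq).
  assert (Hsym := mixed_partials_eq O u x0 y0 HO Op0 HC2).
  assert (HB : forall p, box (x0, y0) p r0 -> (Pu u p <> 0 \/ Qu u p <> 0) ->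
    Rabs (curvature_numerator u p) * dist2 p (x0, y0) <= C * sqrt (Pu u p ^ 2 + Qu u p ^ 2) ^ 3).
  { intros p Hp; destruct (Hbox p Hp) as [Op Hdp]; exact (curvature_numerator_bound O u _ C del HC2 HS0 Hcurv p Op Hdp). }
  assert (Hisolated := detU_eq0_of_not_isolated O u x0 y0 r0 HC2 Hr0 HOr0 HS0 Hsym).
  assert (Harc := local_arc_of_detU_eq0 O u x0 y0 r0 C HC2 Hr0 HOr0 HS0 Hsym HC HB).
  split; split.
  - exact Hisolated.
  - intros Hdet; exact (local_arc_not_isolated _ _ (Harc Hdet)).
  - exact Harc.
  - intros Hloc; exact (Hisolated (local_arc_not_isolated _ _ Hloc)).
Qed.
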